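(* Assume the standing assumptions on $A,\Omega,R,K$ in the context, and let $\rho$ be a fixed bounded smooth function on $\Omega$. Then for $\theta\in]-A,A[$, $\partial_\theta\lambda(\theta,\rho)=-\int_\Omega\partial_\theta R(x,\theta)\,\psi^\theta(x)^2\,dx$.
   Context: Standing assumptions: $A>0$; $\Omega=\bigcup_{i=1}^m ]a_i,b_i[\subset\mathbb{R}$ with $a_1<b_1<\dots<a_m<b_m$; $R\in C^1(\overline\Omega\times[-A,A])$ with $\|R\|_{W^{1,\infty}(\Omega\times]-A,A[)}<C_R$; $K$ is a $C^1$ even function with $K>0$, $0<c_K<K<C_K$, $|K'|<C_K$. $L\phi(x)=\int_\Omega[\phi(x)-\phi(y)]K(x-y)dy$. $\lambda(\theta,\rho)$ is the principal eigenvalue (eigenvalue with a positive eigenfunction) of $\psi\mapsto-\psi''+L\psi-(R(\cdot,\theta)-\rho)\psi$ on $\Omega$ with Neumann boundary condition on $\partial\Omega$, and $\psi^\theta$ is the associated positive eigenfunction normalized by $\|\psi^\theta\|_{L^2(\Omega)}=1$. *)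

From Stdlib Require Import Reals Lra.
From Coquelicot Require Import Coquelicot.
Open Scope R_scope.

Definition ordered_intervals (m : nat) (a b : nat -> R) : Prop :=
  (0 < m)%nat /\
  (forall i, (i < m)%nat -> a i < b i) /\
  (forall i, (S i < m)%nat -> b i < a (S i)).

Definition inOmega (m : nat) (a b : nat -> R) (x : R) : Prop :=
  exists i, (i < m)%nat /\ a i < x < b i.

Definition inOmegaBar (m : nat) (a b : nat -> R) (x : R) : Prop :=
  exists i, (i < m)%nat /\ a i <= x <= b i.

Fixpoint sum_to (m : nat) (f : nat -> R) : R :=
  match m with
  | O => 0
  | S k => sum_to k f + f k
  end.

Definition IntOmega (m : nat) (a b : nat -> R) (f : R -> R) : R :=
  sum_to m (fun i => RInt f (a i) (b i)).

Definition Lop (m : nat) (a b : nat -> R) (K : R -> R) (phi : R -> R) (x : R) : R :=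
  IntOmega m a b (fun y => (phi x - phi y) * K (x - y)).

Definition kernel_hyp (K : R -> R) (cK CK : R) : Prop :=
  0 < cK /\
  (forall x, K (- x) = K x) /\
  (forall x, ex_derive K x) /\
  (forall x, continuous (Derive K) x) /\
  (forall x, cK < K x < CK) /\
  (forall x, Rabs (Derive K x) < CK).

Definition closedDom (m : nat) (a b : nat -> R) (A : R) (p : R * R) : Prop :=
  inOmegaBar m a b (fst p) /\ - A <= snd p <= A.

Definition openDom (m : nat) (a b : nat -> R) (A : R) (p : R * R) : Prop :=
  inOmega m a b (fst p) /\ - A < snd p < A.

Definition cont_on2 (D : R * R -> Prop) (g : R -> R -> R) : Prop :=
  forall p, D p ->
    filterlim (fun q : R * R => g (fst q) (snd q)) (within D (locally p))
              (locally (g (fst p) (snd p))).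

(* Standing assumptions on R: R in C^1(\bar Omega x [-A,A]), i.e. R is
   continuous on the closed set, has partial derivatives in the interior,
   and these partial derivatives extend continuously to the closed set;
   moreover ||R||_{W^{1,oo}} = max(sup|R|, sup|d_x R|, sup|d_theta R|) < C_R. *)
Definition reaction_hyp (m : nat) (a b : nat -> R) (A : R)
    (Rf : R -> R -> R) (CR : R) : Prop :=
  exists Rx Rt : R -> R -> R,
    cont_on2 (closedDom m a b A) Rf /\
    cont_on2 (closedDom m a b A) Rx /\
    cont_on2 (closedDom m a b A) Rt /\
    (forall x t, openDom m a b A (x, t) ->
       is_derive (fun y => Rf y t) x (Rx x t) /\
       is_derive (fun s => Rf x s) t (Rt x t)) /\
    (exists c, c < CR /\
       forall x t, openDom m a b A (x, t) ->
         Rabs (Rf x t) <= c /\ Rabs (Rx x t) <= c /\ Rabs (Rt x t) <= c).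

Definition bounded_smooth_on_Omega (m : nat) (a b : nat -> R) (rho : R -> R) : Prop :=
  (exists M, forall x, inOmega m a b x -> Rabs (rho x) <= M) /\
  (forall n x, inOmega m a b x -> ex_derive (Derive_n rho n) x).

(* (lam, psi) is a principal eigenpair of
     psi |-> - psi'' + L psi - (R(., theta) - rho) psi
   on Omega with Neumann boundary conditions: psi is a classical solution
   (twice differentiable in Omega, continuous up to the boundary of each
   component, psi' having limit 0 at each endpoint from inside Omega),
   and psi > 0 in Omega. *)
Definition principal_eigenpair (m : nat) (a b : nat -> R) (K : R -> R)
    (Rf : R -> R -> R) (rho : R -> R) (theta lam : R) (psi : R -> R) : Prop :=
  (forall x, inOmega m a b x ->
     ex_derive psi x /\ ex_derive (Derive psi) x) /\
  (forall i, (i < m)%nat ->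
     filterlim psi (at_right (a i)) (locally (psi (a i))) /\
     filterlim psi (at_left (b i)) (locally (psi (b i))) /\
     filterlim (Derive psi) (at_right (a i)) (locally 0) /\
     filterlim (Derive psi) (at_left (b i)) (locally 0)) /\
  (forall x, inOmega m a b x ->
     - Derive (Derive psi) x + Lop m a b K psi x
       - (Rf x theta - rho x) * psi x = lam * psi x) /\
  (forall x, inOmega m a b x -> 0 < psi x).

Definition L2_normalized (m : nat) (a b : nat -> R) (psi : R -> R) : Prop :=
  IntOmega m a b (fun x => psi x ^ 2) = 1.

(* Compare the principal eigenpairs (lam, psi) at theta and (lam', phi) at
   theta' = theta + h through the overlap c = int phi psi.  Green's formula,
   the Neumann condition and the symmetry of K give
     (lam' - lam) c = - int (R(., theta') - R(., theta)) phi psi,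
   hence lam' - lam = O(h).  Picone's identity applied to u = phi - c psi, and the
   coercivity of the nonlocal quadratic form coming from K >= c_K, give
   c_K / (sup psi)^2 (1 - c^2) <= O(h); since int u^2 = 1 - c^2, phi = c psi + O(sqrt h)
   in L^2 and c -> 1.  Dividing the identity by h and letting h -> 0 yields
   d lam / d theta = - int d_theta R psi^2.  Picone's identity needs psi > 0 up to
   the boundary, which a Hopf-type argument provides. *)

From Stdlib Require Import Reals Lra Lia.
From Coquelicot Require Import Coquelicot.
Open Scope R_scope.

(** * Continuity and calculus on a segment *)

Definition clamp (p q x : R) : R := Rmax p (Rmin q x).

Lemma clamp_id p q x : p <= x <= q -> clamp p q x = x.
Proof. intros. unfold clamp, Rmax, Rmin. repeat destruct Rle_dec; lra. Qed.

Lemma clamp_in p q x : p <= q -> p <= clamp p q x <= q.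
Proof. intros. unfold clamp, Rmax, Rmin. repeat destruct Rle_dec; lra. Qed.

Lemma clamp_dist p q x y : p <= q -> Rabs (clamp p q y - clamp p q x) <= Rabs (y - x).
Proof. intros. unfold clamp, Rmax, Rmin. repeat destruct Rle_dec; split_Rabs; lra. Qed.

Lemma continuous_clamp p q x : p <= q -> continuous (clamp p q) x.
Proof.
  intros Hpq. apply filterlim_locally. intros eps. exists eps. intros y Hy.
  exact (Rle_lt_trans _ _ _ (clamp_dist p q x y Hpq) Hy).
Qed.

(* Continuity on the closed segment [p, q], one-sided at the endpoints. *)
Definition cont_seg (p q : R) (f : R -> R) : Prop :=
  forall x, continuous (fun y => f (clamp p q y)) x.

Section ContSeg.
Variables p q : R.

Lemma cont_seg_plus f g : cont_seg p q f -> cont_seg p q g -> cont_seg p q (fun x => f x + g x).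
Proof. intros Hf Hg x. exact (continuous_plus _ _ x (Hf x) (Hg x)). Qed.

Lemma cont_seg_opp f : cont_seg p q f -> cont_seg p q (fun x => - f x).
Proof. intros Hf x. exact (continuous_opp _ x (Hf x)). Qed.

Lemma cont_seg_minus f g : cont_seg p q f -> cont_seg p q g -> cont_seg p q (fun x => f x - g x).
Proof. intros Hf Hg. exact (cont_seg_plus _ _ Hf (cont_seg_opp _ Hg)). Qed.

Lemma cont_seg_mult f g : cont_seg p q f -> cont_seg p q g -> cont_seg p q (fun x => f x * g x).
Proof. intros Hf Hg x. exact (continuous_mult _ _ x (Hf x) (Hg x)). Qed.

Lemma cont_seg_const c : cont_seg p q (fun _ => c).
Proof. intros x. apply continuous_const. Qed.

Lemma cont_seg_pow2 f : cont_seg p q f -> cont_seg p q (fun x => f x ^ 2).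
Proof.
  intros Hf x. eapply continuous_ext; [| exact (continuous_mult _ _ x (Hf x) (Hf x))].
  intros y; apply Rsqr_pow2.
Qed.

Lemma cont_seg_abs f : cont_seg p q f -> cont_seg p q (fun x => Rabs (f x)).
Proof. intros Hf x. exact (continuous_Rabs_comp _ x (Hf x)). Qed.

Lemma cont_seg_inv f : p <= q -> cont_seg p q f -> (forall x, p <= x <= q -> f x <> 0) ->
  cont_seg p q (fun x => / f x).
Proof.
  intros Hpq Hf Hnz x. apply continuity_pt_filterlim.
  apply (continuity_pt_inv (fun y => f (clamp p q y))).
  - apply continuity_pt_filterlim, Hf.
  - apply Hnz, clamp_in, Hpq.
Qed.

Lemma cont_seg_of_continuous f : p <= q -> (forall x, continuous f x) -> cont_seg p q f.
Proof. intros Hpq Hf x. apply continuous_comp; [apply continuous_clamp, Hpq | apply Hf]. Qed.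

Lemma cont_seg_intro f : p < q ->
  (forall x, p < x < q -> continuous f x) ->
  filterlim f (at_right p) (locally (f p)) ->
  filterlim f (at_left q) (locally (f q)) -> cont_seg p q f.
Proof.
  intros Hpq Hi Hl Hr.
  destruct (C0_extension_lt f (f p) (f q) p q Hpq Hi Hl Hr) as [g [Hg [Hfg [Hgp Hgq]]]].
  intros x. apply continuous_ext with (fun y => g (clamp p q y)).
  - intros y. pose proof (clamp_in p q y ltac:(lra)) as Hy.
    destruct (Req_dec (clamp p q y) p) as [E|E]; [rewrite E; exact Hgp|].
    destruct (Req_dec (clamp p q y) q) as [E'|E']; [rewrite E'; exact Hgq|].
    apply Hfg; lra.
  - apply continuous_comp; [apply continuous_clamp; lra | apply Hg].
Qed.

Lemma cont_seg_sub p' q' f : p <= p' -> p' <= q' -> q' <= q -> cont_seg p q f -> cont_seg p' q' f.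
Proof.
  intros H1 H2 H3 Hf x.
  apply continuous_ext with (fun y => f (clamp p q (clamp p' q' y))).
  - intros y. rewrite (clamp_id p q); [reflexivity|]. pose proof (clamp_in p' q' y H2). lra.
  - apply (continuous_comp (clamp p' q') (fun z => f (clamp p q z)));
      [apply continuous_clamp; lra | apply Hf].
Qed.

Lemma RInt_clamp (f : R -> R) : p <= q -> RInt (fun y => f (clamp p q y)) p q = RInt f p q.
Proof.
  intros Hpq. apply RInt_ext. intros x Hx.
  rewrite Rmin_left, Rmax_right in Hx by lra. rewrite clamp_id; lra.
Qed.

Lemma ex_RInt_cont_seg (f : R -> R) : p <= q -> cont_seg p q f -> ex_RInt f p q.
Proof.
  intros Hpq Hf. apply (ex_RInt_ext (fun y => f (clamp p q y))).
  - intros x Hx. rewrite Rmin_left, Rmax_right in Hx by lra. rewrite clamp_id; lra.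
  - apply (ex_RInt_continuous (V := R_CompleteNormedModule)). intros; apply Hf.
Qed.

Lemma locally_in_open_seg c : p < c < q -> locally c (fun t => p < t < q).
Proof.
  intros Hc. apply (open_and (fun t => p < t) (fun t => t < q)).
  - apply open_gt. - apply open_lt. - exact Hc.
Qed.

Lemma cont_seg_MVT f df : p < q -> cont_seg p q f ->
  (forall x, p < x < q -> is_derive f x (df x)) ->
  exists c, p < c < q /\ f q - f p = df c * (q - p).
Proof.
  intros Hpq Hf Hd.
  set (g := fun y => f (clamp p q y)).
  assert (Dg : forall c, p < c < q -> derivable_pt_lim g c (df c)).
  { intros c Hc. apply is_derive_Reals. apply is_derive_ext_loc with f; [| apply Hd, Hc].
    eapply filter_imp; [| apply locally_in_open_seg, Hc].
    intros t Ht; unfold g; simpl. rewrite clamp_id; lra. }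
  destruct (MVT g id p q (fun c Hc => exist _ (df c) (Dg c Hc)) (fun c _ => derivable_pt_id c) Hpq)
    as [c [Hc E]].
  - intros c _. apply continuity_pt_filterlim, Hf.
  - intros c _. apply derivable_continuous_pt, derivable_pt_id.
  - exists c. split; [exact Hc|]. simpl in E. rewrite derive_pt_id in E.
    unfold id, g in E. rewrite !clamp_id in E by lra. lra.
Qed.

Lemma is_derive_RInt_clamped (g : R -> R) x : p <= q -> cont_seg p q g ->
  is_derive (fun t => RInt (fun y => g (clamp p q y)) p t) x (g (clamp p q x)).
Proof.
  intros Hpq Hg. apply (is_derive_RInt (V := R_CompleteNormedModule) (fun y => g (clamp p q y)) _ p x).
  - apply filter_forall. intros t. apply RInt_correct.
    apply (ex_RInt_continuous (V := R_CompleteNormedModule)). intros; apply Hg.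
  - apply Hg.
Qed.

(* Mean value theorem for [W] minus a primitive of [g]. *)
Lemma RInt_le_of_derive_ge W g : p < q -> cont_seg p q W -> cont_seg p q g ->
  (forall x, p < x < q -> exists d, is_derive W x d /\ g x <= d) ->
  RInt g p q <= W q - W p.
Proof.
  intros Hpq HW Hg Hd.
  set (G := fun t => RInt (fun y => g (clamp p q y)) p t).
  assert (DG : forall x, is_derive G x (g (clamp p q x))).
  { intros x. apply is_derive_RInt_clamped; [lra | exact Hg]. }
  destruct (cont_seg_MVT (fun t => W t - G t) (fun t => Derive W t - g t) Hpq) as [c [Hc E]].
  - apply cont_seg_minus; [exact HW |]. intros x.
    apply continuous_comp; [apply continuous_clamp; lra |].
    apply (ex_derive_continuous (K := R_AbsRing) (V := R_NormedModule) G). eexists; apply DG.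
  - intros x Hx. apply (is_derive_minus (K := R_AbsRing) (V := R_NormedModule)).
    + destruct (Hd x Hx) as [d [HW' _]]. apply Derive_correct. exists d; exact HW'.
    + replace (g x) with (g (clamp p q x)) by (rewrite clamp_id; lra). apply DG.
  - unfold G in E. rewrite RInt_point, RInt_clamp in E by lra.
    change (@zero R_CompleteNormedModule) with 0 in E.
    destruct (Hd c Hc) as [d [HW' Hle]]. rewrite (is_derive_unique _ _ _ HW') in E. nra.
Qed.

Lemma RInt_eq_of_derive W g : p < q -> cont_seg p q W -> cont_seg p q g ->
  (forall x, p < x < q -> is_derive W x (g x)) ->
  RInt g p q = W q - W p.
Proof.
  intros Hpq HW Hg Hd. apply Rle_antisym.
  - apply (RInt_le_of_derive_ge W g); auto. intros x Hx. exists (g x); split; [apply Hd, Hx | lra].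
  - assert (H : RInt (fun x => - g x) p q <= - W q - - W p).
    { apply (RInt_le_of_derive_ge (fun x => - W x) (fun x => - g x)); auto using cont_seg_opp.
      intros x Hx. exists (- g x); split; [| lra].
      apply (is_derive_opp (K := R_AbsRing) (V := R_NormedModule)), Hd, Hx. }
    rewrite (RInt_opp (V := R_CompleteNormedModule)) in H; [| apply ex_RInt_cont_seg; auto; lra].
    change (opp (RInt g p q)) with (- RInt g p q) in H. lra.
Qed.
End ContSeg.

Lemma ex_RInt_continuous_R (f : R -> R) p q : (forall x, continuous f x) -> ex_RInt f p q.
Proof. intros H. apply (ex_RInt_continuous (V := R_CompleteNormedModule)). intros; apply H. Qed.

Lemma is_derive_RInt_continuous (g : R -> R) p x : (forall x, continuous g x) ->
  is_derive (fun t => RInt g p t) x (g x).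
Proof.
  intros Hg. apply (is_derive_RInt (V := R_CompleteNormedModule) g _ p x); [| apply Hg].
  apply filter_forall. intros t. apply RInt_correct, ex_RInt_continuous_R, Hg.
Qed.

Lemma derive_zero_const (F : R -> R) p q : (forall t, is_derive F t 0) -> F q = F p.
Proof.
  intros H. destruct (MVT_gen F p q (fun _ => 0)) as [c [_ Hc]]; [intros; apply H | | lra].
  intros t _. apply continuity_pt_filterlim.
  apply (ex_derive_continuous (K := R_AbsRing) (V := R_NormedModule)). eexists; apply H.
Qed.

Lemma continuity_2d_pt_of_diff (F : R -> R) u v : (forall x, continuous F x) ->
  continuity_2d_pt (fun x y => F (x - y)) u v.
Proof.
  intros H. apply (continuity_1d_2d_pt_comp F (fun x y => x - y)).
  - apply continuity_pt_filterlim, H.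
  - apply continuity_2d_pt_minus; [apply continuity_2d_pt_id1 | apply continuity_2d_pt_id2].
Qed.

Lemma continuity_2d_pt_of_fst (F : R -> R) u v : (forall x, continuous F x) ->
  continuity_2d_pt (fun x y => F x) u v.
Proof.
  intros H. apply (continuity_1d_2d_pt_comp F (fun x y => x));
    [apply continuity_pt_filterlim, H | apply continuity_2d_pt_id1].
Qed.

Lemma continuity_2d_pt_of_snd (F : R -> R) u v : (forall x, continuous F x) ->
  continuity_2d_pt (fun x y => F y) u v.
Proof.
  intros H. apply (continuity_1d_2d_pt_comp F (fun x y => y));
    [apply continuity_pt_filterlim, H | apply continuity_2d_pt_id2].
Qed.

(** * Integrals over Omega *)

Lemma sum_to_ext n f g : (forall i, (i < n)%nat -> f i = g i) -> sum_to n f = sum_to n g.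
Proof.
  induction n as [|n IH]; intros H; simpl; [reflexivity|].
  rewrite IH, H; [reflexivity | lia | intros; apply H; lia].
Qed.

Lemma sum_to_zero n : sum_to n (fun _ => 0) = 0.
Proof. induction n as [|n IH]; simpl; [| rewrite IH]; lra. Qed.

Lemma sum_to_plus n f g : sum_to n (fun i => f i + g i) = sum_to n f + sum_to n g.
Proof. induction n as [|n IH]; simpl; [| rewrite IH]; lra. Qed.

Lemma sum_to_scal n c f : sum_to n (fun i => c * f i) = c * sum_to n f.
Proof. induction n as [|n IH]; simpl; [| rewrite IH]; lra. Qed.

Lemma sum_to_le n f g : (forall i, (i < n)%nat -> f i <= g i) -> sum_to n f <= sum_to n g.
Proof.
  induction n as [|n IH]; intros H; simpl; [lra|].
  pose proof (H n ltac:(lia)). pose proof (IH ltac:(intros; apply H; lia)). lra.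
Qed.

Lemma sum_to_lt n f g : (0 < n)%nat -> (forall i, (i < n)%nat -> f i < g i) ->
  sum_to n f < sum_to n g.
Proof.
  intros Hn H. destruct n as [|n]; [lia|]. simpl.
  pose proof (H n ltac:(lia)). pose proof (sum_to_le n f g ltac:(intros; apply Rlt_le, H; lia)).
  lra.
Qed.

Lemma sum_to_abs n f : Rabs (sum_to n f) <= sum_to n (fun i => Rabs (f i)).
Proof.
  induction n as [|n IH]; simpl; [rewrite Rabs_R0; lra|].
  eapply Rle_trans; [apply Rabs_triang | lra].
Qed.

Lemma sum_to_swap n k (F : nat -> nat -> R) :
  sum_to n (fun i => sum_to k (fun j => F i j)) = sum_to k (fun j => sum_to n (fun i => F i j)).
Proof.
  induction n as [|n IH]; simpl.
  - symmetry. apply sum_to_zero.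
  - rewrite IH, <- sum_to_plus. reflexivity.
Qed.

Lemma is_RInt_sum_to n (F : nat -> R -> R) p q :
  (forall j, (j < n)%nat -> ex_RInt (F j) p q) ->
  is_RInt (fun x => sum_to n (fun j => F j x)) p q (sum_to n (fun j => RInt (F j) p q)).
Proof.
  induction n as [|n IH]; intros H; simpl.
  - pose proof (is_RInt_const (V := R_CompleteNormedModule) p q 0) as H0.
    change (scal (q - p) 0) with ((q - p) * 0) in H0. rewrite Rmult_0_r in H0. exact H0.
  - apply (is_RInt_plus (V := R_CompleteNormedModule)).
    + apply IH. intros j Hj; apply H; lia.
    + apply RInt_correct, H; lia.
Qed.

Lemma abs_mult_le_amgm x y beta : 0 < beta -> Rabs x * Rabs y <= (beta * x ^ 2 + y ^ 2 / beta) / 2.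
Proof.
  intros Hb. rewrite <- (pow2_abs x), <- (pow2_abs y).
  assert (E : (beta * Rabs x ^ 2 + Rabs y ^ 2 / beta) / 2 - Rabs x * Rabs y
              = beta / 2 * (Rabs x - Rabs y / beta) ^ 2) by (field; lra).
  pose proof (pow2_ge_0 (Rabs x - Rabs y / beta)). nra.
Qed.

Section Omega.
Variables (m : nat) (a b : nat -> R).
Hypothesis HOm : ordered_intervals m a b.

Lemma a_lt_b i : (i < m)%nat -> a i < b i.
Proof. destruct HOm as [_ [H _]]. apply H. Qed.

Lemma inOmega_midpoint : inOmega m a b ((a O + b O) / 2).
Proof. pose proof (proj1 HOm) as Hm. pose proof (a_lt_b O Hm). exists O; split; [exact Hm | lra]. Qed.

Lemma inOmega_closure x : inOmega m a b x -> inOmegaBar m a b x.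
Proof. intros [i [Hi Hx]]. exists i; split; [exact Hi | lra]. Qed.

Lemma abs_bound_nonneg f B : (forall x, inOmega m a b x -> Rabs (f x) <= B) -> 0 <= B.
Proof. intros H. eapply Rle_trans; [apply Rabs_pos | apply H, inOmega_midpoint]. Qed.

Definition cont_Omega (f : R -> R) : Prop :=
  forall i, (i < m)%nat -> cont_seg (a i) (b i) f.

Lemma cont_Omega_plus f g : cont_Omega f -> cont_Omega g -> cont_Omega (fun x => f x + g x).
Proof. intros Hf Hg i Hi. apply cont_seg_plus; auto. Qed.

Lemma cont_Omega_minus f g : cont_Omega f -> cont_Omega g -> cont_Omega (fun x => f x - g x).
Proof. intros Hf Hg i Hi. apply cont_seg_minus; auto. Qed.

Lemma cont_Omega_mult f g : cont_Omega f -> cont_Omega g -> cont_Omega (fun x => f x * g x).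
Proof. intros Hf Hg i Hi. apply cont_seg_mult; auto. Qed.

Lemma cont_Omega_opp f : cont_Omega f -> cont_Omega (fun x => - f x).
Proof. intros Hf i Hi. apply cont_seg_opp; auto. Qed.

Lemma cont_Omega_const c : cont_Omega (fun _ => c).
Proof. intros i Hi. apply cont_seg_const. Qed.

Lemma cont_Omega_pow2 f : cont_Omega f -> cont_Omega (fun x => f x ^ 2).
Proof. intros Hf i Hi. apply cont_seg_pow2; auto. Qed.

Lemma cont_Omega_abs f : cont_Omega f -> cont_Omega (fun x => Rabs (f x)).
Proof. intros Hf i Hi. apply cont_seg_abs; auto. Qed.

Lemma cont_Omega_inv f : cont_Omega f -> (forall x, inOmegaBar m a b x -> f x <> 0) ->
  cont_Omega (fun x => / f x).
Proof.
  intros Hf Hnz i Hi. pose proof (a_lt_b i Hi).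
  apply cont_seg_inv; auto; [lra|]. intros x Hx. apply Hnz. exists i; auto.
Qed.

Lemma cont_Omega_of_continuous f : (forall x, continuous f x) -> cont_Omega f.
Proof. intros Hf i Hi. pose proof (a_lt_b i Hi). apply cont_seg_of_continuous; auto; lra. Qed.

Lemma ex_RInt_cont_Omega f i : cont_Omega f -> (i < m)%nat -> ex_RInt f (a i) (b i).
Proof. intros Hf Hi. pose proof (a_lt_b i Hi). apply ex_RInt_cont_seg; auto; lra. Qed.

Lemma IntOmega_ext f g : (forall x, inOmega m a b x -> f x = g x) ->
  IntOmega m a b f = IntOmega m a b g.
Proof.
  intros H. apply sum_to_ext. intros i Hi. pose proof (a_lt_b i Hi).
  apply RInt_ext. intros x Hx. rewrite Rmin_left, Rmax_right in Hx by lra.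
  apply H. exists i; auto.
Qed.

Lemma IntOmega_plus f g : cont_Omega f -> cont_Omega g ->
  IntOmega m a b (fun x => f x + g x) = IntOmega m a b f + IntOmega m a b g.
Proof.
  intros Hf Hg. unfold IntOmega. rewrite <- sum_to_plus. apply sum_to_ext. intros i Hi.
  apply (RInt_plus (V := R_CompleteNormedModule)); apply ex_RInt_cont_Omega; auto.
Qed.

Lemma IntOmega_scal c f : cont_Omega f ->
  IntOmega m a b (fun x => c * f x) = c * IntOmega m a b f.
Proof.
  intros Hf. unfold IntOmega. rewrite <- sum_to_scal. apply sum_to_ext. intros i Hi.
  apply (RInt_scal (V := R_CompleteNormedModule)); apply ex_RInt_cont_Omega; auto.
Qed.

Lemma IntOmega_minus f g : cont_Omega f -> cont_Omega g ->
  IntOmega m a b (fun x => f x - g x) = IntOmega m a b f - IntOmega m a b g.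
Proof.
  intros Hf Hg.
  rewrite (IntOmega_ext _ (fun x => f x + (-1) * g x)) by (intros; ring).
  rewrite IntOmega_plus, IntOmega_scal; auto; [ring|].
  apply cont_Omega_mult; auto using cont_Omega_const.
Qed.

Lemma IntOmega_le f g : cont_Omega f -> cont_Omega g ->
  (forall x, inOmega m a b x -> f x <= g x) -> IntOmega m a b f <= IntOmega m a b g.
Proof.
  intros Hf Hg H. apply sum_to_le. intros i Hi. pose proof (a_lt_b i Hi).
  apply RInt_le; try lra; try (apply ex_RInt_cont_Omega; auto).
  intros x Hx. apply H. exists i; auto.
Qed.

Lemma IntOmega_abs f : cont_Omega f ->
  Rabs (IntOmega m a b f) <= IntOmega m a b (fun x => Rabs (f x)).
Proof.
  intros Hf. eapply Rle_trans; [apply sum_to_abs |]. apply sum_to_le.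
  intros i Hi. pose proof (a_lt_b i Hi).
  apply abs_RInt_le; [lra | apply ex_RInt_cont_Omega; auto].
Qed.

Lemma IntOmega_pos f : cont_Omega f -> (forall x, inOmega m a b x -> 0 < f x) ->
  0 < IntOmega m a b f.
Proof.
  intros Hf H. unfold IntOmega. rewrite <- (sum_to_zero m).
  apply sum_to_lt; [apply HOm |]. intros i Hi. pose proof (a_lt_b i Hi).
  rewrite <- RInt_clamp by lra. apply RInt_gt_0; [lra | | intros; apply Hf; auto].
  intros x Hx. rewrite clamp_id by lra. apply H. exists i; auto.
Qed.

End Omega.

Ltac cont_Omega_step :=
  match goal with
  | |- cont_Omega _ _ _ (fun _ => ?c) => apply cont_Omega_const
  | |- cont_Omega _ _ _ (fun _ => _ + _) => apply cont_Omega_plus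
  | |- cont_Omega _ _ _ (fun _ => _ - _) => apply cont_Omega_minus
  | |- cont_Omega _ _ _ (fun _ => _ * _) => apply cont_Omega_mult
  | |- cont_Omega _ _ _ (fun _ => - _) => apply cont_Omega_opp
  | |- cont_Omega _ _ _ (fun _ => Rabs _) => apply cont_Omega_abs
  | |- cont_Omega _ _ _ (fun _ => _ ^ 2) => apply cont_Omega_pow2
  | |- cont_Omega _ _ _ (fun _ => / _) => apply cont_Omega_inv
  end.

Ltac prove_cont_Omega := repeat (first [assumption | cont_Omega_step]).

Lemma IntOmega_abs_mult_le m a b (HOm : ordered_intervals m a b) f g u B beta :
  cont_Omega m a b f -> cont_Omega m a b g -> cont_Omega m a b u -> 0 < beta ->
  (forall x, inOmega m a b x -> Rabs (f x) <= B) ->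
  Rabs (IntOmega m a b (fun x => f x * g x * u x))
  <= B / 2 * (beta * IntOmega m a b (fun x => g x ^ 2) + IntOmega m a b (fun x => u x ^ 2) / beta).
Proof.
  intros Hf Hg Hu Hbeta HB.
  eapply Rle_trans; [apply IntOmega_abs; [exact HOm | prove_cont_Omega] |].
  replace (B / 2 * (beta * IntOmega m a b (fun x => g x ^ 2) + IntOmega m a b (fun x => u x ^ 2) / beta))
    with (IntOmega m a b (fun x => B * ((beta * g x ^ 2 + u x ^ 2 / beta) / 2))).
  - apply IntOmega_le; [exact HOm | prove_cont_Omega | unfold Rdiv; prove_cont_Omega |].
    intros x Hx. rewrite !Rabs_mult, Rmult_assoc.
    apply Rmult_le_compat; [apply Rabs_pos | apply Rmult_le_pos; apply Rabs_pos | apply HB, Hx |].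
    apply abs_mult_le_amgm, Hbeta.
  - rewrite (IntOmega_ext m a b HOm _ (fun x => (B * beta / 2) * g x ^ 2 + (B / (2 * beta)) * u x ^ 2))
      by (intros; field; lra).
    rewrite IntOmega_plus, !IntOmega_scal by prove_cont_Omega. field. lra.
Qed.

(** * The nonlocal operator *)

Section Kernel.
Variable K : R -> R.
Hypothesis HKd : forall x, ex_derive K x.
Hypothesis HKc : forall x, continuous (Derive K) x.

Lemma continuous_K x : continuous K x.
Proof. apply (ex_derive_continuous (K := R_AbsRing) (V := R_NormedModule) K), HKd. Qed.

Lemma continuous_K_shift x y : continuous (fun z => K (x - z)) y.
Proof.
  apply (continuous_comp (fun z => x - z) K); [| apply continuous_K].
  apply (continuous_minus (fun _ => x) (fun z => z)); [apply continuous_const | apply continuous_id].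
Qed.

Definition conv_seg (h : R -> R) (p q x : R) : R := RInt (fun y => K (x - y) * h y) p q.

Lemma is_derive_conv_seg (h : R -> R) p q x : (forall x, continuous h x) ->
  is_derive (conv_seg h p q) x (RInt (fun y => Derive K (x - y) * h y) p q).
Proof.
  intros Hh.
  assert (DK : forall u v, is_derive (fun z => K (z - v) * h v) u (Derive K (u - v) * h v)).
  { intros u v. auto_derive; [apply HKd | change (fun x => K x) with K; unfold Rminus; ring]. }
  erewrite RInt_ext; [| intros y _; symmetry; apply is_derive_unique, (DK x y)].
  apply (is_derive_RInt_param (fun u y => K (u - y) * h y)).
  - apply filter_forall. intros u t _. eexists; apply DK.
  - intros t _. apply continuity_2d_pt_ext with (fun u v => Derive K (u - v) * h v).
    + intros; symmetry; apply is_derive_unique, DK.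
    + apply continuity_2d_pt_mult; [apply continuity_2d_pt_of_diff | apply continuity_2d_pt_of_snd]; auto.
  - apply filter_forall. intros y. apply ex_RInt_continuous_R. intros z.
    apply (continuous_mult (fun z => K (y - z)) h); [apply continuous_K_shift | apply Hh].
Qed.

Lemma continuous_conv_seg (h : R -> R) p q x : (forall x, continuous h x) ->
  continuous (conv_seg h p q) x.
Proof.
  intros Hh. apply (ex_derive_continuous (K := R_AbsRing) (V := R_NormedModule)).
  eexists; apply is_derive_conv_seg, Hh.
Qed.

Lemma is_derive_conv_seg_upper (h : R -> R) p t y : (forall x, continuous h x) ->
  is_derive (fun s => conv_seg h p s y) t (K (y - t) * h t).
Proof.
  intros Hh. apply (is_derive_RInt_continuous (fun z => K (y - z) * h z)).
  intros z. apply (continuous_mult (fun z => K (y - z)) h); [apply continuous_K_shift | apply Hh].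
Qed.

Lemma is_derive_RInt_conv_seg_upper (h1 h2 : R -> R) p c d t :
  (forall x, continuous h1 x) -> (forall x, continuous h2 x) ->
  is_derive (fun s => RInt (fun y => h2 y * conv_seg h1 p s y) c d) t
            (RInt (fun y => h2 y * (K (y - t) * h1 t)) c d).
Proof.
  intros H1 H2.
  assert (Dy : forall u y, is_derive (fun s => h2 y * conv_seg h1 p s y) u (h2 y * (K (y - u) * h1 u))).
  { intros u y. apply (is_derive_scal (fun s => conv_seg h1 p s y)), is_derive_conv_seg_upper, H1. }
  erewrite RInt_ext; [| intros y _; symmetry; apply is_derive_unique, (Dy t y)].
  apply (is_derive_RInt_param (fun u y => h2 y * conv_seg h1 p u y)).
  - apply filter_forall. intros u y _. eexists; apply Dy.
  - intros y _. apply continuity_2d_pt_ext with (fun u v => h2 v * (K (v - u) * h1 u)).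
    + intros; symmetry; apply is_derive_unique, Dy.
    + apply continuity_2d_pt_mult; [apply continuity_2d_pt_of_snd, H2 |].
      apply continuity_2d_pt_mult; [| apply continuity_2d_pt_of_fst, H1].
      apply (continuity_1d_2d_pt_comp K (fun x y => y - x)); [apply continuity_pt_filterlim, continuous_K |].
      apply continuity_2d_pt_minus; [apply continuity_2d_pt_id2 | apply continuity_2d_pt_id1].
  - apply filter_forall. intros u. apply ex_RInt_continuous_R. intros z.
    apply (continuous_mult h2 (conv_seg h1 p u)); [apply H2 | apply continuous_conv_seg, H1].
Qed.

Hypothesis HKeven : forall x, K (- x) = K x.

(* Both sides vanish at [q = p] and, [K] being even, have the same derivative in [q]. *)
Lemma RInt_conv_seg_swap (h1 h2 : R -> R) p q c d :
  (forall x, continuous h1 x) -> (forall x, continuous h2 x) ->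
  RInt (fun x => h1 x * conv_seg h2 c d x) p q = RInt (fun y => h2 y * conv_seg h1 p q y) c d.
Proof.
  intros H1 H2.
  set (Phi := fun t => RInt (fun x => h1 x * conv_seg h2 c d x) p t
                       - RInt (fun y => h2 y * conv_seg h1 p t y) c d).
  assert (E : forall t, RInt (fun y => h2 y * (K (y - t) * h1 t)) c d = h1 t * conv_seg h2 c d t).
  { intros t. unfold conv_seg. rewrite <- (RInt_scal (V := R_CompleteNormedModule)).
    - apply RInt_ext. intros y _. replace (y - t) with (- (t - y)) by ring. rewrite HKeven.
      change (h2 y * (K (t - y) * h1 t) = h1 t * (K (t - y) * h2 y)). ring.
    - apply ex_RInt_continuous_R. intros y.
      apply (continuous_mult (fun y => K (t - y)) h2); [apply continuous_K_shift | apply H2]. }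
  assert (HPhi : Phi q = Phi p).
  { apply derive_zero_const. intros t.
    replace 0 with (minus (h1 t * conv_seg h2 c d t) (h1 t * conv_seg h2 c d t))
      by (change (h1 t * conv_seg h2 c d t - h1 t * conv_seg h2 c d t = 0); ring).
    apply (is_derive_minus (K := R_AbsRing) (V := R_NormedModule)).
    - apply (is_derive_RInt_continuous (fun x => h1 x * conv_seg h2 c d x)). intros x.
      apply (continuous_mult h1 (conv_seg h2 c d)); [apply H1 | apply continuous_conv_seg, H2].
    - rewrite <- E. apply is_derive_RInt_conv_seg_upper; assumption. }
  unfold Phi in HPhi; cbv beta in HPhi. rewrite RInt_point in HPhi.
  rewrite (RInt_ext (fun y => h2 y * conv_seg h1 p p y) (fun _ => 0)) in HPhi
    by (intros; unfold conv_seg; rewrite RInt_point; apply Rmult_0_r).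
  rewrite (RInt_const (V := R_CompleteNormedModule)) in HPhi.
  change (@zero R_CompleteNormedModule) with 0 in HPhi.
  change (scal (d - c) 0) with ((d - c) * 0) in HPhi. lra.
Qed.
End Kernel.

Section KernelOmega.
Variables (K : R -> R) (m : nat) (a b : nat -> R).
Hypothesis HOm : ordered_intervals m a b.
Hypothesis HKd : forall x, ex_derive K x.
Hypothesis HKc : forall x, continuous (Derive K) x.

Definition Kconv (f : R -> R) (x : R) : R := IntOmega m a b (fun y => K (x - y) * f y).

Let ext j (f : R -> R) (y : R) : R := f (clamp (a j) (b j) y).

Lemma Kconv_as_sum f x :
  Kconv f x = sum_to m (fun j => conv_seg K (ext j f) (a j) (b j) x).
Proof.
  apply sum_to_ext. intros j Hj. pose proof (a_lt_b m a b HOm j Hj).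
  apply RInt_ext. intros y Hy. rewrite Rmin_left, Rmax_right in Hy by lra.
  unfold ext. rewrite clamp_id by lra. reflexivity.
Qed.

Lemma continuous_Kconv f x : cont_Omega m a b f -> continuous (Kconv f) x.
Proof.
  intros Hf. apply continuous_ext with (fun x => sum_to m (fun j => conv_seg K (ext j f) (a j) (b j) x)).
  { intros; symmetry; apply Kconv_as_sum. }
  clear - HKd HKc Hf. induction m as [|n IH]; simpl; [apply continuous_const|].
  apply (continuous_plus (fun x => sum_to n (fun j => conv_seg K (ext j f) (a j) (b j) x))).
  - apply IH. intros i Hi; apply Hf; lia.
  - apply continuous_conv_seg; auto. apply Hf; lia.
Qed.

Lemma cont_Omega_Kconv f : cont_Omega m a b f -> cont_Omega m a b (Kconv f).
Proof. intros Hf. apply cont_Omega_of_continuous; auto. intros; apply continuous_Kconv, Hf. Qed.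

Lemma cont_Omega_K_shift x : cont_Omega m a b (fun y => K (x - y)).
Proof. apply cont_Omega_of_continuous; auto. apply continuous_K_shift, HKd. Qed.

Lemma Lop_Kconv f x : cont_Omega m a b f ->
  Lop m a b K f x = f x * Kconv (fun _ => 1) x - Kconv f x.
Proof.
  intros Hf. unfold Lop, Kconv.
  rewrite (IntOmega_ext m a b HOm _ (fun y => f x * (K (x - y) * 1) - K (x - y) * f y))
    by (intros; ring).
  pose proof (cont_Omega_K_shift x).
  rewrite IntOmega_minus, IntOmega_scal; auto; prove_cont_Omega.
Qed.

Lemma IntOmega_mult_Kconv f g : cont_Omega m a b f -> cont_Omega m a b g ->
  IntOmega m a b (fun x => f x * Kconv g x) =
  sum_to m (fun i => sum_to m (fun j =>
    RInt (fun x => ext i f x * conv_seg K (ext j g) (a j) (b j) x) (a i) (b i))).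
Proof.
  intros Hf Hg. apply sum_to_ext. intros i Hi. pose proof (a_lt_b m a b HOm i Hi).
  assert (Hex : forall j, (j < m)%nat ->
    ex_RInt (fun x => ext i f x * conv_seg K (ext j g) (a j) (b j) x) (a i) (b i)).
  { intros j Hj. apply ex_RInt_continuous_R. intros x.
    apply (continuous_mult (ext i f) (conv_seg K (ext j g) (a j) (b j))); [apply Hf, Hi |].
    apply continuous_conv_seg; auto. apply Hg, Hj. }
  rewrite <- (is_RInt_unique _ _ _ _ (is_RInt_sum_to m _ (a i) (b i) Hex)).
  apply RInt_ext. intros x Hx. rewrite Rmin_left, Rmax_right in Hx by lra.
  rewrite Kconv_as_sum, <- sum_to_scal. unfold ext at 2. rewrite clamp_id by lra. reflexivity.
Qed.

Hypothesis HKeven : forall x, K (- x) = K x.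

Lemma IntOmega_Kconv_sym f g : cont_Omega m a b f -> cont_Omega m a b g ->
  IntOmega m a b (fun x => f x * Kconv g x) = IntOmega m a b (fun x => g x * Kconv f x).
Proof.
  intros Hf Hg. rewrite !IntOmega_mult_Kconv, sum_to_swap; auto.
  apply sum_to_ext; intros j Hj. apply sum_to_ext; intros i Hi.
  apply RInt_conv_seg_swap; auto; [apply Hf | apply Hg]; assumption.
Qed.

End KernelOmega.

(** * Neumann eigenpairs and their comparison *)

(* The derivative of [f] on ]p, q[, extended by its Neumann boundary value 0
   at the endpoints (and outside). *)
Definition Dseg (p q : R) (f : R -> R) (x : R) : R :=
  if Rlt_dec p x then if Rlt_dec x q then Derive f x else 0 else 0.

Section Dseg.
Variables (p q : R) (f : R -> R).

Lemma Dseg_in x : p < x < q -> Dseg p q f x = Derive f x.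
Proof. intros H. unfold Dseg. destruct Rlt_dec; [destruct Rlt_dec |]; lra. Qed.

Lemma Dseg_left : Dseg p q f p = 0.
Proof. unfold Dseg. destruct Rlt_dec; lra. Qed.

Lemma Dseg_right : Dseg p q f q = 0.
Proof. unfold Dseg. destruct Rlt_dec; [destruct Rlt_dec |]; lra. Qed.

Lemma locally_Dseg x : p < x < q -> locally x (fun t => Derive f t = Dseg p q f t).
Proof.
  intros H. eapply filter_imp; [| apply (locally_in_open_seg p q x H)].
  intros t Ht; simpl. rewrite Dseg_in; auto.
Qed.

Lemma is_derive_Dseg x : p < x < q -> ex_derive (Derive f) x ->
  is_derive (Dseg p q f) x (Derive (Derive f) x).
Proof.
  intros Hx Hd. apply is_derive_ext_loc with (Derive f); [apply locally_Dseg, Hx |].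
  apply Derive_correct, Hd.
Qed.

Lemma cont_seg_Dseg : p < q ->
  (forall x, p < x < q -> ex_derive (Derive f) x) ->
  filterlim (Derive f) (at_right p) (locally 0) ->
  filterlim (Derive f) (at_left q) (locally 0) -> cont_seg p q (Dseg p q f).
Proof.
  intros Hpq Hd Hl Hr.
  assert (Hi : forall x, p < x < q -> Dseg p q f x = Derive f x) by exact Dseg_in.
  apply cont_seg_intro; auto.
  - intros x Hx. apply continuous_ext_loc with (Derive f); [apply locally_Dseg, Hx |].
    apply (ex_derive_continuous (K := R_AbsRing) (V := R_NormedModule)), Hd, Hx.
  - rewrite Dseg_left. apply filterlim_ext_loc with (Derive f); auto.
    exists (mkposreal (q - p) ltac:(lra)). intros t Ht Hpt. simpl in Ht.
    apply Rabs_lt_between' in Ht. rewrite Hi; [reflexivity | simpl in Ht; lra].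
  - rewrite Dseg_right. apply filterlim_ext_loc with (Derive f); auto.
    exists (mkposreal (q - p) ltac:(lra)). intros t Ht Hpt. simpl in Ht.
    apply Rabs_lt_between' in Ht. rewrite Hi; [reflexivity | simpl in Ht; lra].
Qed.
End Dseg.

Section Eigenpair.
Variables (m : nat) (a b : nat -> R) (K : R -> R) (Rf : R -> R -> R) (rho : R -> R).
Variables (th lam : R) (psi : R -> R).
Hypothesis HOm : ordered_intervals m a b.
Hypothesis Hpsi : principal_eigenpair m a b K Rf rho th lam psi.

Lemma eigen_cont_Omega : cont_Omega m a b psi.
Proof.
  intros i Hi. pose proof (a_lt_b m a b HOm i Hi).
  destruct Hpsi as [Hd [Hbd _]]. destruct (Hbd i Hi) as [H1 [H2 _]].
  apply cont_seg_intro; auto. intros x Hx.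
  apply (ex_derive_continuous (K := R_AbsRing) (V := R_NormedModule)).
  apply Hd. exists i; auto.
Qed.

Lemma eigen_cont_seg_Dseg i : (i < m)%nat -> cont_seg (a i) (b i) (Dseg (a i) (b i) psi).
Proof.
  intros Hi. pose proof (a_lt_b m a b HOm i Hi).
  destruct Hpsi as [Hd [Hbd _]]. destruct (Hbd i Hi) as [_ [_ [H3 H4]]].
  apply cont_seg_Dseg; auto. intros x Hx. apply Hd. exists i; auto.
Qed.

Lemma eigen_second_derive x : inOmega m a b x ->
  Derive (Derive psi) x = Lop m a b K psi x - (Rf x th - rho x) * psi x - lam * psi x.
Proof. intros Hx. destruct Hpsi as [_ [_ [He _]]]. specialize (He x Hx). lra. Qed.

End Eigenpair.

Lemma pointwise_gap (k P D cK M : R) : cK <= k -> 0 < cK -> 0 < P <= M ^ 2 -> 0 <= D ->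
  cK / M ^ 2 * (P ^ 2 * D) <= k * (P * D).
Proof.
  intros Hk HcK [HP HPM] HD.
  assert (HM : M <> 0) by (intro; subst; lra).
  set (t := cK / M ^ 2).
  assert (Ht : t * M ^ 2 = cK) by (unfold t; field; exact HM).
  assert (Ht0 : 0 < t) by (unfold t; apply Rdiv_lt_0_compat; lra).
  assert (0 <= P * D) by nra.
  assert (t * P <= cK) by nra.
  nra.
Qed.

Section NonlocalGap.
Variables (m : nat) (a b : nat -> R) (K : R -> R) (cK M : R) (psi w u : R -> R).
Hypothesis HOm : ordered_intervals m a b.
Hypothesis HKd : forall x, ex_derive K x.
Hypothesis HKc : forall x, continuous (Derive K) x.
Hypothesis HKeven : forall x, K (- x) = K x.
Hypothesis HcK : forall x, cK <= K x.
Hypothesis HcK0 : 0 < cK.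
Hypotheses (Cpsi : cont_Omega m a b psi) (Cw : cont_Omega m a b w) (Cu : cont_Omega m a b u).
Hypothesis Hpsi : forall x, inOmega m a b x -> 0 < psi x <= M.
Hypothesis Hu : forall x, inOmega m a b x -> u x = w x * psi x.

Local Notation Kc := (Kconv K m a b).
Local Notation Int := (IntOmega m a b).
Let CK f := cont_Omega_Kconv K m a b HOm HKd HKc f.
Let CKs x := cont_Omega_K_shift K m a b HOm HKd x.

Lemma nonlocal_gap_at x : inOmega m a b x ->
  cK / M ^ 2 * (u x ^ 2 * Int (fun y => psi y ^ 2) - 2 * (u x * psi x) * Int (fun y => u y * psi y)
                + psi x ^ 2 * Int (fun y => u y ^ 2))
  <= w x * u x * Kc psi x + psi x * Kc (fun y => w y * u y) x - 2 * (u x * Kc u x).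
Proof.
  intros Hx. pose proof (CKs x).
  replace (cK / M ^ 2 * _) with (Int (fun y => cK / M ^ 2 * (u x * psi y - psi x * u y) ^ 2)).
  2:{ rewrite (IntOmega_ext m a b HOm _ (fun y => (cK / M ^ 2 * u x ^ 2) * psi y ^ 2
               - (2 * (cK / M ^ 2) * u x * psi x) * (u y * psi y) + (cK / M ^ 2 * psi x ^ 2) * u y ^ 2))
        by (intros; ring).
      rewrite IntOmega_plus, IntOmega_minus, !IntOmega_scal by prove_cont_Omega. ring. }
  replace (w x * u x * Kc psi x + _ - _)
    with (Int (fun y => K (x - y) * (w x * u x * psi y + psi x * (w y * u y) - 2 * (u x * u y)))).
  2:{ unfold Kconv.
      rewrite (IntOmega_ext m a b HOm _ (fun y => (w x * u x) * (K (x - y) * psi y)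
                 + psi x * (K (x - y) * (w y * u y)) - (2 * u x) * (K (x - y) * u y))) by (intros; ring).
      rewrite IntOmega_minus, IntOmega_plus, !IntOmega_scal by prove_cont_Omega. ring. }
  apply IntOmega_le; [exact HOm | prove_cont_Omega | prove_cont_Omega |].
  intros y Hy. rewrite (Hu x Hx), (Hu y Hy). destruct (Hpsi x Hx), (Hpsi y Hy).
  replace (cK / M ^ 2 * (w x * psi x * psi y - psi x * (w y * psi y)) ^ 2)
    with (cK / M ^ 2 * ((psi x * psi y) ^ 2 * (w x - w y) ^ 2)) by ring.
  replace (K (x - y) * (w x * (w x * psi x) * psi y + psi x * (w y * (w y * psi y))
                        - 2 * (w x * psi x * (w y * psi y))))
    with (K (x - y) * ((psi x * psi y) * (w x - w y) ^ 2)) by ring.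
  apply pointwise_gap; auto; [nra | apply pow2_ge_0].
Qed.

(* Integrating [nonlocal_gap_at]: by the symmetry of [K], the right-hand side is
   the quadratic form (1/2) int int K(x-y) psi(x) psi(y) (w(x) - w(y))^2. *)
Lemma nonlocal_gap :
  cK / M ^ 2 * (Int (fun x => u x ^ 2) * Int (fun x => psi x ^ 2) - Int (fun x => u x * psi x) ^ 2)
  <= Int (fun x => w x * u x * Kc psi x) - Int (fun x => u x * Kc u x).
Proof.
  assert (Cwu : cont_Omega m a b (fun x => w x * u x)) by prove_cont_Omega.
  assert (Hsym : Int (fun x => w x * u x * Kc psi x) = Int (fun x => psi x * Kc (fun y => w y * u y) x))
    by exact (IntOmega_Kconv_sym K m a b HOm HKd HKc HKeven _ _ Cwu Cpsi).
  pose proof (CK psi Cpsi). pose proof (CK u Cu). pose proof (CK _ Cwu).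
  pose proof (fun Cl Cr => IntOmega_le m a b HOm _ _ Cl Cr nonlocal_gap_at) as I.
  specialize (I ltac:(prove_cont_Omega) ltac:(prove_cont_Omega)).
  set (Nu := Int (fun x => u x ^ 2)) in *. set (Np := Int (fun x => psi x ^ 2)) in *.
  set (Iup := Int (fun x => u x * psi x)) in *.
  rewrite (IntOmega_ext m a b HOm _ (fun x => (cK / M ^ 2 * Np) * u x ^ 2
             - (2 * (cK / M ^ 2) * Iup) * (u x * psi x) + (cK / M ^ 2 * Nu) * psi x ^ 2)) in I
    by (intros; ring).
  rewrite IntOmega_plus, IntOmega_minus, !IntOmega_scal, IntOmega_minus, IntOmega_plus,
    (IntOmega_scal m a b HOm 2 (fun x => u x * Kc u x)) in I by prove_cont_Omega.
  rewrite <- Hsym in I. fold Nu Np Iup in I. lra.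
Qed.
End NonlocalGap.

(* Picone's identity: the derivative of
   [V = (f' - c g') u - g' u^2 / g], with [u = f - c g], exceeds
   [(u / g) (f'' g - g'' f)] by [(u' - u g' / g)^2]. *)
Lemma picone_derive p q (f g : R -> R) c x : p < x < q ->
  ex_derive f x -> ex_derive g x -> ex_derive (Derive f) x -> ex_derive (Derive g) x -> g x <> 0 ->
  exists dV,
    is_derive (fun x => (Dseg p q f x - c * Dseg p q g x) * (f x - c * g x)
                        - Dseg p q g x * (f x - c * g x) ^ 2 / g x) x dV /\
    (f x - c * g x) / g x * (Derive (Derive f) x * g x - Derive (Derive g) x * f x) <= dV.
Proof.
  intros Hx H1 H2 H3 H4 H5.
  set (u := f x - c * g x). set (f1 := Derive f x). set (g1 := Derive g x).
  set (f2 := Derive (Derive f) x). set (g2 := Derive (Derive g) x).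
  exists ((f2 - c * g2) * u + (f1 - c * g1) ^ 2 - g2 * u ^ 2 / g x
          - 2 * g1 * (f1 - c * g1) * u / g x + g1 ^ 2 * u ^ 2 / g x ^ 2).
  split.
  - apply is_derive_ext_loc with (fun x => (Derive f x - c * Derive g x) * (f x - c * g x)
                                          - Derive g x * (f x - c * g x) ^ 2 / g x).
    + eapply filter_imp; [| apply (filter_and _ _ (locally_Dseg p q f x Hx) (locally_Dseg p q g x Hx))].
      intros t [E1 E2]; simpl. rewrite E1, E2; reflexivity.
    + auto_derive; [repeat split; auto |].
      change (fun x => Derive f x) with (Derive f). change (fun x => Derive g x) with (Derive g).
      change (fun x => f x) with f. change (fun x => g x) with g.
      unfold u, f1, g1, f2, g2. field; exact H5.
  - assert (E : (f2 - c * g2) * u + (f1 - c * g1) ^ 2 - g2 * u ^ 2 / g x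
                - 2 * g1 * (f1 - c * g1) * u / g x + g1 ^ 2 * u ^ 2 / g x ^ 2
                - u / g x * (f2 * g x - g2 * f x) = (f1 - c * g1 - u * g1 / g x) ^ 2)
      by (unfold u; field; exact H5).
    pose proof (pow2_ge_0 (f1 - c * g1 - u * g1 / g x)). fold u f2 g2. lra.
Qed.

Section Pair.
Variables (m : nat) (a b : nat -> R) (K : R -> R) (Rf : R -> R -> R) (rho : R -> R).
Variables (th th' lam lam' : R) (psi phi : R -> R).
Hypothesis HOm : ordered_intervals m a b.
Hypothesis HKd : forall x, ex_derive K x.
Hypothesis HKc : forall x, continuous (Derive K) x.
Hypothesis HKeven : forall x, K (- x) = K x.
Hypothesis Hpsi : principal_eigenpair m a b K Rf rho th lam psi.
Hypothesis Hphi : principal_eigenpair m a b K Rf rho th' lam' phi.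
Hypothesis HR : cont_Omega m a b (fun x => Rf x th).
Hypothesis HR' : cont_Omega m a b (fun x => Rf x th').

Let Cpsi := eigen_cont_Omega m a b K Rf rho th lam psi HOm Hpsi.
Let Cphi := eigen_cont_Omega m a b K Rf rho th' lam' phi HOm Hphi.
Let CKpsi := cont_Omega_Kconv K m a b HOm HKd HKc psi Cpsi.
Let CKphi := cont_Omega_Kconv K m a b HOm HKd HKc phi Cphi.

(* [G = phi'' psi - psi'' phi] in Omega. *)
Let G x := phi x * Kconv K m a b psi x - psi x * Kconv K m a b phi x
           - (Rf x th' - Rf x th + (lam' - lam)) * (phi x * psi x).

Let CG : cont_Omega m a b G.
Proof. unfold G. prove_cont_Omega. Qed.

Lemma wronskian_second_derive x : inOmega m a b x ->
  Derive (Derive phi) x * psi x - Derive (Derive psi) x * phi x = G x.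
Proof.
  intros Hx.
  rewrite (eigen_second_derive m a b K Rf rho th lam psi Hpsi x Hx),
          (eigen_second_derive m a b K Rf rho th' lam' phi Hphi x Hx),
          !(Lop_Kconv K m a b HOm HKd) by assumption.
  unfold G. ring.
Qed.

Let phi_psi_pos x : inOmega m a b x -> 0 < phi x * psi x.
Proof. intros Hx. apply Rmult_lt_0_compat; [apply Hphi | apply Hpsi]; exact Hx. Qed.

Let Dpsi x := proj1 Hpsi x.
Let Dphi x := proj1 Hphi x.

Lemma is_derive_wronskian i x : (i < m)%nat -> a i < x < b i ->
  is_derive (fun x => Dseg (a i) (b i) phi x * psi x - Dseg (a i) (b i) psi x * phi x) x (G x).
Proof.
  intros Hi Hx. assert (Hx' : inOmega m a b x) by (exists i; auto).
  rewrite <- wronskian_second_derive by exact Hx'.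
  destruct (Dpsi x Hx') as [P1 P2]. destruct (Dphi x Hx') as [F1 F2].
  apply is_derive_ext_loc with (fun x => Derive phi x * psi x - Derive psi x * phi x).
  - eapply filter_imp; [| apply (filter_and _ _ (locally_Dseg _ _ phi x Hx) (locally_Dseg _ _ psi x Hx))].
    intros t [E1 E2]; simpl. rewrite E1, E2; reflexivity.
  - auto_derive; [auto |].
    change (fun x => Derive phi x) with (Derive phi). change (fun x => Derive psi x) with (Derive psi).
    change (fun x => psi x) with psi. change (fun x => phi x) with phi. ring.
Qed.

(* Green's formula: the Neumann condition kills the boundary terms. *)
Lemma IntOmega_wronskian : IntOmega m a b G = 0.
Proof.
  unfold IntOmega. rewrite <- (sum_to_zero m). apply sum_to_ext. intros i Hi.
  pose proof (a_lt_b m a b HOm i Hi).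
  pose proof (eigen_cont_seg_Dseg m a b K Rf rho th lam psi HOm Hpsi i Hi).
  pose proof (eigen_cont_seg_Dseg m a b K Rf rho th' lam' phi HOm Hphi i Hi).
  rewrite (RInt_eq_of_derive _ _ (fun x => Dseg (a i) (b i) phi x * psi x - Dseg (a i) (b i) psi x * phi x));
    auto using is_derive_wronskian.
  - rewrite !Dseg_left, !Dseg_right. ring.
  - apply cont_seg_minus; apply cont_seg_mult; auto.
Qed.

Lemma eigenvalue_difference_identity :
  IntOmega m a b (fun x => (Rf x th' - Rf x th) * (phi x * psi x)) +
  (lam' - lam) * IntOmega m a b (fun x => phi x * psi x) = 0.
Proof.
  pose proof IntOmega_wronskian as H. unfold G in H.
  rewrite !IntOmega_minus in H by prove_cont_Omega.
  rewrite (IntOmega_Kconv_sym K m a b HOm HKd HKc HKeven phi psi) in H by assumption.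
  rewrite <- IntOmega_scal by prove_cont_Omega.
  rewrite <- IntOmega_plus by prove_cont_Omega.
  rewrite <- (IntOmega_ext m a b HOm (fun x => (Rf x th' - Rf x th + (lam' - lam)) * (phi x * psi x)))
    by (intros; ring).
  lra.
Qed.

Hypothesis Hpsi_bar : forall x, inOmegaBar m a b x -> psi x <> 0.

(* The boundary terms of Picone's [V] vanish by the Neumann condition. *)
Lemma IntOmega_picone_le c :
  IntOmega m a b (fun x => (phi x - c * psi x) / psi x * G x) <= 0.
Proof.
  unfold IntOmega. rewrite <- (sum_to_zero m). apply sum_to_le. intros i Hi.
  pose proof (a_lt_b m a b HOm i Hi).
  assert (Hi' : cont_Omega m a b (fun x => / psi x)) by (apply cont_Omega_inv; auto).
  pose proof (eigen_cont_seg_Dseg m a b K Rf rho th lam psi HOm Hpsi i Hi).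
  pose proof (eigen_cont_seg_Dseg m a b K Rf rho th' lam' phi HOm Hphi i Hi).
  eapply Rle_trans.
  - apply (RInt_le_of_derive_ge _ _
      (fun x => (Dseg (a i) (b i) phi x - c * Dseg (a i) (b i) psi x) * (phi x - c * psi x)
                - Dseg (a i) (b i) psi x * (phi x - c * psi x) ^ 2 / psi x)); auto.
    + assert (Cu : cont_seg (a i) (b i) (fun x => phi x - c * psi x)).
      { apply cont_seg_minus; [| apply cont_seg_mult; [apply cont_seg_const |]];
          [apply Cphi | apply Cpsi]; exact Hi. }
      unfold Rdiv. apply cont_seg_minus; apply cont_seg_mult.
      * apply cont_seg_minus; [| apply cont_seg_mult; [apply cont_seg_const |]]; assumption.
      * exact Cu.
      * apply cont_seg_mult; [assumption | apply cont_seg_pow2, Cu].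
      * apply Hi', Hi.
    + unfold Rdiv. apply (cont_Omega_mult m a b); auto. prove_cont_Omega.
    + intros x Hx. assert (Hx' : inOmega m a b x) by (exists i; auto).
      destruct (Dpsi x Hx'), (Dphi x Hx').
      rewrite <- wronskian_second_derive by exact Hx'.
      apply picone_derive; auto. apply Hpsi_bar, inOmega_closure, Hx'.
  - rewrite !Dseg_left, !Dseg_right. lra.
Qed.

Lemma IntOmega_picone_expand c :
  IntOmega m a b (fun x => (phi x - c * psi x) / psi x * G x)
  = IntOmega m a b (fun x => (phi x - c * psi x) / psi x * (phi x - c * psi x) * Kconv K m a b psi x)
    - IntOmega m a b (fun x => (phi x - c * psi x) * Kconv K m a b (fun y => phi y - c * psi y) x)
    - IntOmega m a b (fun x => (Rf x th' - Rf x th + (lam' - lam)) * (phi x - c * psi x) * phi x).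
Proof.
  assert (Cu : cont_Omega m a b (fun y => phi y - c * psi y)) by prove_cont_Omega.
  pose proof (cont_Omega_Kconv K m a b HOm HKd HKc _ Cu).
  assert (Kphi : forall x, Kconv K m a b phi x
                           = Kconv K m a b (fun y => phi y - c * psi y) x + c * Kconv K m a b psi x).
  { intros x. unfold Kconv. pose proof (cont_Omega_K_shift K m a b HOm HKd x).
    rewrite <- IntOmega_scal, <- IntOmega_plus by prove_cont_Omega.
    apply IntOmega_ext; [exact HOm |]. intros; ring. }
  rewrite <- !IntOmega_minus by (unfold Rdiv; prove_cont_Omega).
  apply IntOmega_ext; [exact HOm |]. intros x Hx. unfold G. rewrite Kphi.
  field. apply Hpsi_bar, inOmega_closure, Hx.
Qed.

Hypotheses (cK M s : R) (HcK : forall x, cK <= K x) (HcK0 : 0 < cK).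
Hypothesis Hpsi_le : forall x, inOmega m a b x -> psi x <= M.
Hypothesis HRs : forall x, inOmega m a b x -> Rabs (Rf x th' - Rf x th) <= s.
Hypotheses (Npsi : L2_normalized m a b psi) (Nphi : L2_normalized m a b phi).

Local Notation c := (IntOmega m a b (fun x => phi x * psi x)).

Lemma IntOmega_orth_sq : IntOmega m a b (fun x => (phi x - c * psi x) ^ 2) = 1 - c ^ 2.
Proof.
  unfold L2_normalized in Npsi, Nphi.
  rewrite (IntOmega_ext m a b HOm _ (fun x => phi x ^ 2 - (2 * c) * (phi x * psi x) + c ^ 2 * psi x ^ 2))
    by (intros; ring).
  rewrite IntOmega_plus, IntOmega_minus, !IntOmega_scal by prove_cont_Omega.
  rewrite Npsi, Nphi. ring.
Qed.


Lemma overlap_gap : cK / M ^ 2 * (1 - c ^ 2) <= s + Rabs (lam' - lam).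
Proof.
  unfold L2_normalized in Npsi, Nphi.
  set (u := fun x => phi x - c * psi x).
  set (w := fun x => u x / psi x).
  set (dl := lam' - lam).
  assert (Hpos : forall x, inOmega m a b x -> 0 < psi x <= M).
  { intros x Hx. split; [exact (proj2 (proj2 (proj2 Hpsi)) x Hx) | apply Hpsi_le, Hx]. }
  assert (Cu : cont_Omega m a b u) by (unfold u; prove_cont_Omega).
  assert (Cw : cont_Omega m a b w) by (unfold w, Rdiv; prove_cont_Omega).
  assert (Nu : IntOmega m a b (fun x => u x ^ 2) = 1 - c ^ 2) by exact IntOmega_orth_sq.
  assert (Iup : IntOmega m a b (fun x => u x * psi x) = 0).
  { rewrite (IntOmega_ext m a b HOm _ (fun x => phi x * psi x - c * psi x ^ 2)) by (intros; unfold u; ring).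
    rewrite IntOmega_minus, IntOmega_scal, Npsi by prove_cont_Omega. ring. }
  assert (Huw : forall x, inOmega m a b x -> u x = w x * psi x).
  { intros x Hx. unfold w. field. destruct (Hpos x Hx); lra. }
  pose proof (nonlocal_gap m a b K cK M psi w u HOm HKd HKc HKeven HcK HcK0 Cpsi Cw Cu Hpos Huw) as NG.
  rewrite Nu, Iup, Npsi in NG.
  assert (PG : IntOmega m a b (fun x => w x * u x * Kconv K m a b psi x)
               - IntOmega m a b (fun x => u x * Kconv K m a b u x)
               - IntOmega m a b (fun x => (Rf x th' - Rf x th + dl) * u x * phi x) <= 0).
  { pose proof (IntOmega_picone_le c) as PG. rewrite IntOmega_picone_expand in PG. exact PG. }
  assert (HRdl : forall x, inOmega m a b x -> Rabs (Rf x th' - Rf x th + dl) <= s + Rabs dl)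
    by (intros x Hx; eapply Rle_trans; [apply Rabs_triang | pose proof (HRs x Hx); lra]).
  pose proof (IntOmega_abs_mult_le m a b HOm (fun x => Rf x th' - Rf x th + dl) u phi (s + Rabs dl) 1
                ltac:(prove_cont_Omega) Cu Cphi ltac:(lra) HRdl) as B.
  cbv beta in B. rewrite Nu, Nphi in B. apply Rabs_le_between in B.
  pose proof (abs_bound_nonneg m a b HOm _ s HRs) as Hs0.
  pose proof (pow2_ge_0 c). pose proof (Rabs_pos dl).
  nra.
Qed.

Lemma overlap_pos : 0 < c.
Proof.
  apply IntOmega_pos; [exact HOm | prove_cont_Omega | exact phi_psi_pos].
Qed.

Lemma IntOmega_overlap_weight_le f eta : cont_Omega m a b f ->
  (forall x, inOmega m a b x -> Rabs (f x) <= eta) ->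
  Rabs (IntOmega m a b (fun x => f x * (phi x * psi x))) <= eta * c.
Proof.
  intros Cf Hf.
  eapply Rle_trans; [apply IntOmega_abs; [exact HOm | prove_cont_Omega] |].
  rewrite <- IntOmega_scal by prove_cont_Omega.
  apply IntOmega_le; [exact HOm | prove_cont_Omega | prove_cont_Omega |].
  intros x Hx. rewrite Rabs_mult, (Rabs_pos_eq (phi x * psi x)) by (apply Rlt_le, phi_psi_pos, Hx).
  apply Rmult_le_compat_r; [apply Rlt_le, phi_psi_pos, Hx | apply Hf, Hx].
Qed.

Lemma eigenvalue_shift_bound : Rabs (lam' - lam) <= s.
Proof.
  pose proof eigenvalue_difference_identity as E. pose proof overlap_pos as Hc.
  set (S := IntOmega m a b (fun x => (Rf x th' - Rf x th) * (phi x * psi x))) in E.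
  assert (HS : Rabs S <= s * c) by (apply IntOmega_overlap_weight_le; [prove_cont_Omega | exact HRs]).
  assert (Edl : lam' - lam = - S / c) by (field_simplify_eq; nra).
  rewrite Edl.
  unfold Rdiv. rewrite Rabs_mult, Rabs_Ropp, Rabs_inv, (Rabs_pos_eq c) by lra.
  apply Rmult_le_reg_r with c; [exact Hc |]. rewrite Rmult_assoc, Rinv_l by lra. lra.
Qed.

Lemma overlap_near_one tau : tau <= 3 / 4 -> 2 * s <= cK / M ^ 2 * tau ->
  1 / 2 <= c /\ 1 - c ^ 2 <= tau.
Proof.
  intros Htau Hs. pose proof overlap_gap. pose proof eigenvalue_shift_bound. pose proof overlap_pos.
  assert (HM : 0 < M ^ 2).
  { pose proof (inOmega_midpoint m a b HOm) as Hx.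
    pose proof (proj2 (proj2 (proj2 Hpsi)) _ Hx). pose proof (Hpsi_le _ Hx). nra. }
  assert (Hgap : cK / M ^ 2 * (1 - c ^ 2) <= cK / M ^ 2 * tau) by lra.
  assert (1 - c ^ 2 <= tau).
  { apply Rmult_le_reg_l with (cK / M ^ 2); [apply Rdiv_lt_0_compat |]; lra. }
  split; [nra | lra].
Qed.

Lemma difference_quotient_error h (Rt : R -> R) (B eta beta : R) :
  h <> 0 -> 0 < beta -> 1 / 2 <= c -> 1 - c ^ 2 <= beta ^ 2 ->
  (forall x, inOmega m a b x -> Rabs ((Rf x th' - Rf x th) / h - Rt x) <= eta) ->
  (forall x, inOmega m a b x -> Rabs (Rt x) <= B) -> cont_Omega m a b Rt ->
  Rabs ((lam' - lam) / h - - IntOmega m a b (fun x => Rt x * psi x ^ 2)) <= eta + 2 * B * beta.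
Proof.
  intros Hh Hbeta Hc Hc2 Hq HB CRt.
  pose proof overlap_pos as Hc0. pose proof eigenvalue_difference_identity as E.
  set (S := IntOmega m a b (fun x => (Rf x th' - Rf x th) * (phi x * psi x))) in E.
  set (T := IntOmega m a b (fun x => Rt x * psi x ^ 2)).
  set (u := fun x => phi x - c * psi x).
  assert (EX : S / h - c * T = IntOmega m a b (fun x => ((Rf x th' - Rf x th) / h - Rt x) * (phi x * psi x))
                               + IntOmega m a b (fun x => Rt x * psi x * u x)).
  { transitivity (IntOmega m a b (fun x => / h * ((Rf x th' - Rf x th) * (phi x * psi x))
                                         - c * (Rt x * psi x ^ 2))).
    - rewrite IntOmega_minus, !IntOmega_scal by prove_cont_Omega. unfold S, T, Rdiv. ring.
    - rewrite <- IntOmega_plus by (unfold u, Rdiv; prove_cont_Omega).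
      apply IntOmega_ext; [exact HOm |]. intros x _. unfold u. field. exact Hh. }
  assert (X1 : Rabs (IntOmega m a b (fun x => ((Rf x th' - Rf x th) / h - Rt x) * (phi x * psi x)))
               <= eta * c) by (apply IntOmega_overlap_weight_le; [unfold Rdiv; prove_cont_Omega | exact Hq]).
  assert (X2 : Rabs (IntOmega m a b (fun x => Rt x * psi x * u x)) <= B * beta).
  { pose proof (abs_bound_nonneg m a b HOm Rt B HB).
    eapply Rle_trans;
      [apply (IntOmega_abs_mult_le m a b HOm Rt psi u B beta); auto; unfold u; prove_cont_Omega |].
    unfold u. rewrite IntOmega_orth_sq. unfold L2_normalized in Npsi. rewrite Npsi.
    apply Rle_trans with (B / 2 * (beta * 1 + beta ^ 2 / beta)); [| right; field; lra].
    apply Rmult_le_compat_l; [lra |]. apply Rplus_le_compat_l.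
    apply Rmult_le_compat_r; [apply Rlt_le, Rinv_0_lt_compat, Hbeta | exact Hc2]. }
  assert (Edl : (lam' - lam) / h - - T = - (S / h - c * T) / c) by (field_simplify_eq; [nra | split; lra]).
  rewrite Edl. unfold Rdiv at 1. rewrite Rabs_mult, Rabs_Ropp, Rabs_inv, (Rabs_pos_eq c) by lra.
  rewrite EX.
  pose proof (Rabs_triang
    (IntOmega m a b (fun x => ((Rf x th' - Rf x th) / h - Rt x) * (phi x * psi x)))
    (IntOmega m a b (fun x => Rt x * psi x * u x))).
  apply Rle_trans with ((eta * c + B * beta) * / c).
  - apply Rmult_le_compat_r; [apply Rlt_le, Rinv_0_lt_compat |]; lra.
  - assert (0 <= B * beta) by (eapply Rle_trans; [apply Rabs_pos | exact X2]).
    apply Rle_trans with (eta + B * beta * / c); [right; field; lra |].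
    assert (/ c <= 2) by (apply Rle_trans with (/ (1/2)); [apply Rinv_le_contravar |]; lra).
    nra.
Qed.
End Pair.

(** * Positivity up to the boundary *)

Lemma concave_chord p q (f Df D2f : R -> R) : p < q -> cont_seg p q f -> cont_seg p q Df ->
  (forall x, p < x < q -> is_derive f x (Df x)) ->
  (forall x, p < x < q -> is_derive Df x (D2f x) /\ D2f x < 0) ->
  Df q * (q - p) < f q - f p < Df p * (q - p).
Proof.
  intros Hpq Cf CDf Hf HDf.
  destruct (cont_seg_MVT p q f Df Hpq Cf Hf) as [c [Hc E]].
  destruct (cont_seg_MVT p c Df D2f) as [c1 [Hc1 E1]];
    [lra | apply (cont_seg_sub p q); auto; lra | intros x Hx; apply HDf; lra |].
  destruct (cont_seg_MVT c q Df D2f) as [c2 [Hc2 E2]];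
    [lra | apply (cont_seg_sub p q); auto; lra | intros x Hx; apply HDf; lra |].
  pose proof (proj2 (HDf c1 ltac:(lra))). pose proof (proj2 (HDf c2 ltac:(lra))).
  assert (Df c < Df p) by nra. assert (Df q < Df c) by nra.
  rewrite E. split; apply Rmult_lt_compat_r; lra.
Qed.

Lemma cont_seg_near_left p q (f : R -> R) e : p < q -> cont_seg p q f -> 0 < e ->
  exists r, p < r < q /\ forall x, p <= x <= r -> Rabs (f x - f p) < e.
Proof.
  intros Hpq Hf He.
  destruct (proj1 (filterlim_locally _ _) (Hf p) (mkposreal e He)) as [d Hd].
  pose proof (Rmin_l d (q - p)). pose proof (Rmin_r d (q - p)).
  pose proof (Rmin_pos d (q - p) (cond_pos d) ltac:(lra)).
  exists (p + Rmin d (q - p) / 2). split; [lra |]. intros x Hx.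
  assert (Hb : Rabs (x - p) < d) by (rewrite Rabs_pos_eq; lra).
  specialize (Hd x Hb). rewrite !clamp_id in Hd by lra. exact Hd.
Qed.

Lemma cont_seg_near_right p q (f : R -> R) e : p < q -> cont_seg p q f -> 0 < e ->
  exists r, p < r < q /\ forall x, r <= x <= q -> Rabs (f x - f q) < e.
Proof.
  intros Hpq Hf He.
  destruct (proj1 (filterlim_locally _ _) (Hf q) (mkposreal e He)) as [d Hd].
  pose proof (Rmin_l d (q - p)). pose proof (Rmin_r d (q - p)).
  pose proof (Rmin_pos d (q - p) (cond_pos d) ltac:(lra)).
  exists (q - Rmin d (q - p) / 2). split; [lra |]. intros x Hx.
  assert (Hb : Rabs (x - q) < d) by (rewrite Rabs_left1; lra).
  specialize (Hd x Hb). rewrite !clamp_id in Hd by lra. exact Hd.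
Qed.

(* Hopf-type argument: near an endpoint where [psi <= 0], [psi'' <= B psi - g < 0],
   so [psi] is strictly concave there and, as [psi' = 0] at the endpoint, [psi]
   would be even smaller inside. *)
Lemma neumann_boundary_pos p q (psi : R -> R) B g : p < q -> 0 <= B -> 0 < g ->
  cont_seg p q psi -> cont_seg p q (Dseg p q psi) ->
  (forall x, p < x < q -> ex_derive psi x /\ ex_derive (Derive psi) x) ->
  (forall x, p < x < q -> 0 < psi x) ->
  (forall x, p < x < q -> Derive (Derive psi) x <= B * psi x - g) ->
  0 < psi p /\ 0 < psi q.
Proof.
  intros Hpq HB Hg Cp Cd Hd Hpos HD2.
  set (eta := g / (B + 1)).
  assert (Heta : 0 < eta) by (apply Rdiv_lt_0_compat; lra).
  assert (HBe : B * eta < g).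
  { unfold eta. apply Rmult_lt_reg_r with (B + 1); [lra |].
    replace (B * (g / (B + 1)) * (B + 1)) with (B * g) by (field; lra). nra. }
  assert (Hchord : forall r s, p <= r < s -> s <= q -> (forall x, r < x < s -> psi x < eta) ->
            Dseg p q psi s * (s - r) < psi s - psi r < Dseg p q psi r * (s - r)).
  { intros r s Hrs Hsq Hsmall.
    apply (concave_chord r s psi (Dseg p q psi) (Derive (Derive psi)));
      [lra | apply (cont_seg_sub p q); auto; lra | apply (cont_seg_sub p q); auto; lra | |].
    - intros x Hx. rewrite Dseg_in by lra. apply Derive_correct, Hd; lra.
    - intros x Hx. split; [apply is_derive_Dseg; [lra | apply Hd; lra] |].
      pose proof (HD2 x ltac:(lra)). pose proof (Hpos x ltac:(lra)). pose proof (Hsmall x Hx). nra. }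
  split; apply Rnot_le_lt; intros H0.
  - destruct (cont_seg_near_left p q psi eta Hpq Cp Heta) as [r [Hr Hnear]].
    destruct (Hchord p r) as [_ H]; [lra | lra | |].
    + intros x Hx. specialize (Hnear x ltac:(lra)). apply Rabs_lt_between' in Hnear. lra.
    + rewrite Dseg_left in H. pose proof (Hpos r Hr). lra.
  - destruct (cont_seg_near_right p q psi eta Hpq Cp Heta) as [r [Hr Hnear]].
    destruct (Hchord r q) as [H _]; [lra | lra | |].
    + intros x Hx. specialize (Hnear x ltac:(lra)). apply Rabs_lt_between' in Hnear. lra.
    + rewrite Dseg_right in H. pose proof (Hpos r Hr). lra.
Qed.

Section EigenPositivity.
Variables (m : nat) (a b : nat -> R) (K : R -> R) (Rf : R -> R -> R) (rho : R -> R).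
Variables (th lam : R) (psi : R -> R) (cK CK C1 Mr : R).
Hypothesis HOm : ordered_intervals m a b.
Hypothesis HKd : forall x, ex_derive K x.
Hypotheses (HcK : forall x, cK <= K x) (HCK : forall x, K x <= CK) (HcK0 : 0 < cK).
Hypothesis Hpsi : principal_eigenpair m a b K Rf rho th lam psi.
Hypothesis HR : forall x, inOmega m a b x -> Rabs (Rf x th) <= C1.
Hypothesis Hrho : forall x, inOmega m a b x -> Rabs (rho x) <= Mr.

Let Cpsi := eigen_cont_Omega m a b K Rf rho th lam psi HOm Hpsi.
Let Hpos := proj2 (proj2 (proj2 Hpsi)).

Lemma eigen_second_derive_le x : inOmega m a b x ->
  Derive (Derive psi) x <=
  (CK * IntOmega m a b (fun _ => 1) + C1 + Mr + Rabs lam) * psi x - cK * IntOmega m a b psi.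
Proof.
  intros Hx. pose proof (cont_Omega_K_shift K m a b HOm HKd x).
  rewrite (eigen_second_derive m a b K Rf rho th lam psi Hpsi x Hx), (Lop_Kconv K m a b HOm HKd psi x Cpsi).
  assert (k1 : Kconv K m a b (fun _ => 1) x <= CK * IntOmega m a b (fun _ => 1)).
  { unfold Kconv. rewrite <- IntOmega_scal by prove_cont_Omega.
    apply IntOmega_le; [exact HOm | prove_cont_Omega | prove_cont_Omega |].
    intros y _. rewrite !Rmult_1_r. apply HCK. }
  assert (k2 : cK * IntOmega m a b psi <= Kconv K m a b psi x).
  { unfold Kconv. rewrite <- IntOmega_scal by prove_cont_Omega.
    apply IntOmega_le; [exact HOm | prove_cont_Omega | prove_cont_Omega |]. intros y Hy.
    apply Rmult_le_compat_r; [apply Rlt_le, Hpos, Hy | apply HcK]. }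
  specialize (HR x Hx). specialize (Hrho x Hx). pose proof (Hpos x Hx).
  assert (Rf x th - rho x + lam >= - (C1 + Mr + Rabs lam)).
  { pose proof (Rle_abs (- lam)). rewrite Rabs_Ropp in *.
    apply Rabs_le_between in HR. apply Rabs_le_between in Hrho. lra. }
  nra.
Qed.

Lemma eigen_pos_closure x : inOmegaBar m a b x -> 0 < psi x.
Proof.
  intros [i [Hi Hx]]. pose proof (a_lt_b m a b HOm i Hi).
  assert (Hin : forall y, a i < y < b i -> inOmega m a b y) by (intros y Hy; exists i; auto).
  assert (HB : 0 <= CK * IntOmega m a b (fun _ => 1) + C1 + Mr + Rabs lam).
  { pose proof (abs_bound_nonneg m a b HOm _ _ HR). pose proof (abs_bound_nonneg m a b HOm _ _ Hrho).
    pose proof (Rabs_pos lam). pose proof (Rlt_le_trans _ _ _ HcK0 (Rle_trans _ _ _ (HcK 0) (HCK 0))).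
    assert (0 < IntOmega m a b (fun _ => 1))
      by (apply (IntOmega_pos m a b HOm); [prove_cont_Omega | intros; lra]).
    nra. }
  assert (Hg : 0 < cK * IntOmega m a b psi)
    by (apply Rmult_lt_0_compat; [exact HcK0 | apply (IntOmega_pos m a b HOm); auto]).
  destruct (neumann_boundary_pos (a i) (b i) psi _ _ ltac:(lra) HB Hg) as [Pa Pb].
  - apply Cpsi, Hi.
  - apply (eigen_cont_seg_Dseg m a b K Rf rho th lam psi HOm Hpsi i Hi).
  - intros y Hy. apply Hpsi, Hin, Hy.
  - intros y Hy. apply Hpos, Hin, Hy.
  - intros y Hy. apply eigen_second_derive_le, Hin, Hy.
  - destruct Hx as [[Hx1 | <-] [Hx2 | ->]]; [apply Hpos, Hin; lra | exact Pb | exact Pa | exact Pb].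
Qed.
End EigenPositivity.

(** * Uniform bounds on Omega *)

Lemma finite_upper_bound n (P : nat -> R -> Prop) :
  (forall i, (i < n)%nat -> exists M, P i M) ->
  (forall i M M', P i M -> M <= M' -> P i M') ->
  exists M, forall i, (i < n)%nat -> P i M.
Proof.
  intros H Hmono. induction n as [|n IH]; [exists 0; intros; lia |].
  destruct IH as [M1 HM1]; [intros; apply H; lia |].
  destruct (H n ltac:(lia)) as [M2 HM2].
  exists (Rmax M1 M2). intros i Hi. destruct (Nat.eq_dec i n) as [-> | Hne].
  - apply Hmono with M2; [exact HM2 | apply Rmax_r].
  - apply Hmono with M1; [apply HM1; lia | apply Rmax_l].
Qed.

Lemma finite_pos_lower_bound n (Q : nat -> R -> Prop) :
  (forall i, (i < n)%nat -> exists d, 0 < d /\ Q i d) ->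
  (forall i d d', Q i d -> 0 < d' <= d -> Q i d') ->
  exists d, 0 < d /\ forall i, (i < n)%nat -> Q i d.
Proof.
  intros H Hmono. induction n as [|n IH]; [exists 1; split; [lra | intros; lia] |].
  destruct IH as [d1 [Hd1 HQ1]]; [intros; apply H; lia |].
  destruct (H n ltac:(lia)) as [d2 [Hd2 HQ2]].
  pose proof (Rmin_pos d1 d2 Hd1 Hd2). pose proof (Rmin_l d1 d2). pose proof (Rmin_r d1 d2).
  exists (Rmin d1 d2). split; [assumption |]. intros i Hi. destruct (Nat.eq_dec i n) as [-> | Hne].
  - apply Hmono with d2; [exact HQ2 | lra].
  - apply Hmono with d1; [apply HQ1; lia | lra].
Qed.

Lemma cont_Omega_bounded m a b f : ordered_intervals m a b -> cont_Omega m a b f ->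
  exists M, forall x, inOmega m a b x -> f x <= M.
Proof.
  intros HOm Hf.
  destruct (finite_upper_bound m (fun i M => forall x, a i <= x <= b i -> f x <= M)) as [M HM].
  - intros i Hi. pose proof (a_lt_b m a b HOm i Hi).
    destruct (continuity_ab_maj (fun y => f (clamp (a i) (b i) y)) (a i) (b i)) as [x0 [Hx0 _]];
      [lra | intros c _; apply continuity_pt_filterlim, Hf, Hi |].
    exists (f (clamp (a i) (b i) x0)). intros x Hx. specialize (Hx0 x Hx). simpl in Hx0.
    rewrite clamp_id in Hx0; assumption.
  - intros i M M' H1 H2 x Hx. specialize (H1 x Hx). lra.
  - exists M. intros x [i [Hi Hx]]. apply (HM i Hi). lra.
Qed.

Section ReactionRegularity.
Variables (m : nat) (a b : nat -> R) (A : R) (g : R -> R -> R).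
Hypothesis HOm : ordered_intervals m a b.
Hypothesis Hg : cont_on2 (closedDom m a b A) g.

Lemma continuity_2d_clamped i th x : (i < m)%nat -> - A < th < A ->
  continuity_2d_pt (fun u v => g (clamp (a i) (b i) u) v) x th.
Proof.
  intros Hi Hth eps. pose proof (a_lt_b m a b HOm i Hi).
  assert (Dp : closedDom m a b A (clamp (a i) (b i) x, th)).
  { split; [exists i; split; [exact Hi | apply clamp_in; lra] | simpl; lra]. }
  destruct (proj1 (filterlim_locally _ _) (Hg _ Dp) eps) as [d Hd].
  assert (Hd0 : 0 < Rmin d (A - Rabs th)).
  { apply Rmin_pos; [apply cond_pos |]. pose proof (Rabs_def1 th A (proj2 Hth) (proj1 Hth)). lra. }
  exists (mkposreal _ Hd0). intros u v Hu Hv. simpl in Hu, Hv.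
  pose proof (Rmin_l d (A - Rabs th)). pose proof (Rmin_r d (A - Rabs th)).
  apply (Hd (clamp (a i) (b i) u, v)).
  - split; simpl.
    + eapply Rle_lt_trans; [apply clamp_dist; lra | change (Rabs (u - x) < d); lra].
    + change (Rabs (v - th) < d). lra.
  - split; [exists i; split; [exact Hi | apply clamp_in; lra] | simpl].
    assert (Rabs (v - th) < A - Rabs th) by lra. split_Rabs; lra.
Qed.

Lemma cont_Omega_slice th : - A < th < A -> cont_Omega m a b (fun x => g x th).
Proof.
  intros Hth i Hi x. apply filterlim_locally. intros eps.
  destruct (continuity_2d_clamped i th x Hi Hth eps) as [d Hd].
  exists d. intros y Hy. apply Hd; [exact Hy |]. rewrite Rminus_diag, Rabs_R0. apply cond_pos.
Qed.

Lemma uniform_continuity_slice th eps : - A < th < A -> 0 < eps ->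
  exists d, 0 < d /\ forall x v, inOmega m a b x -> Rabs (v - th) <= d -> Rabs (g x v - g x th) < eps.
Proof.
  intros Hth Heps.
  destruct (finite_pos_lower_bound m (fun i d => forall x v, a i < x < b i -> Rabs (v - th) <= d ->
                                                   Rabs (g x v - g x th) < eps)) as [d [Hd HQ]].
  - intros i Hi. pose proof (a_lt_b m a b HOm i Hi).
    destruct (uniform_continuity_2d_1d (fun u v => g (clamp (a i) (b i) u) v) (a i) (b i) th)
      with (mkposreal _ Heps) as [d Hd]; [intros x _; apply continuity_2d_clamped; auto |].
    exists d. split; [apply cond_pos |]. intros x v Hx Hv.
    specialize (Hd x th x v). simpl in Hd. rewrite !clamp_id in Hd by lra.
    pose proof (cond_pos d). apply Rabs_le_between' in Hv.
    apply Hd; try lra. rewrite Rminus_diag, Rabs_R0. apply cond_pos.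
  - intros i d0 d' H1 H2 x v Hx Hv. apply H1; [exact Hx | lra].
  - exists d. split; [exact Hd |]. intros x v [i [Hi Hx]] Hv. apply (HQ i Hi); assumption.
Qed.
End ReactionRegularity.

Section ReactionQuotient.
Variables (m : nat) (a b : nat -> R) (A B : R) (Rf Rt : R -> R -> R).
Hypothesis HOm : ordered_intervals m a b.
Hypothesis HRt : forall x t, openDom m a b A (x, t) -> is_derive (fun s => Rf x s) t (Rt x t).
Hypothesis CRt : cont_on2 (closedDom m a b A) Rt.
Hypothesis HB : forall x t, openDom m a b A (x, t) -> Rabs (Rt x t) <= B.

Lemma reaction_increment x th th' : inOmega m a b x -> - A < th < A -> - A < th' < A ->
  exists xi, - A < xi < A /\ Rabs (xi - th) <= Rabs (th' - th) /\
             Rf x th' - Rf x th = Rt x xi * (th' - th).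
Proof.
  intros Hx Hth Hth'.
  destruct (MVT_gen (fun s => Rf x s) th th' (Rt x)) as [xi [Hxi E]].
  - intros t Ht. apply HRt. split; [exact Hx | simpl].
    pose proof (Rmin_glb_lt _ _ _ (proj1 Hth) (proj1 Hth')).
    pose proof (Rmax_lub_lt _ _ _ (proj2 Hth) (proj2 Hth')). lra.
  - intros t Ht. apply continuity_pt_filterlim.
    apply (ex_derive_continuous (K := R_AbsRing) (V := R_NormedModule) (fun s => Rf x s)).
    exists (Rt x t). apply HRt. split; [exact Hx | simpl].
    revert Ht. unfold Rmin, Rmax. destruct Rle_dec; lra.
  - exists xi. revert Hxi. unfold Rmin, Rmax.
    destruct Rle_dec; intros Hxi; (split; [lra | split; [split_Rabs; lra | exact E]]).
Qed.

Lemma reaction_difference_quotient th eta : - A < th < A -> 0 < eta ->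
  exists d, 0 < d /\ forall h x, h <> 0 -> Rabs h <= d -> - A < th + h < A -> inOmega m a b x ->
    Rabs (Rf x (th + h) - Rf x th) <= B * Rabs h /\
    Rabs ((Rf x (th + h) - Rf x th) / h - Rt x th) <= eta.
Proof.
  intros Hth Heta.
  destruct (uniform_continuity_slice m a b A Rt HOm CRt th eta Hth Heta) as [d [Hd Hu]].
  exists d. split; [exact Hd |]. intros h x Hh Hhd Hth' Hx.
  destruct (reaction_increment x th (th + h) Hx Hth Hth') as [xi [Hxi [Hdist E]]].
  replace (th + h - th) with h in E, Hdist by ring.
  rewrite E. split.
  - rewrite Rabs_mult. apply Rmult_le_compat_r; [apply Rabs_pos | apply HB; split; auto].
  - replace (Rt x xi * h / h) with (Rt x xi) by (field; exact Hh).
    apply Rlt_le, Hu; [exact Hx | lra].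
Qed.
End ReactionQuotient.

(** * Differentiability of the principal eigenvalue *)

Section EigenvalueDerivative.
Variables (m : nat) (a b : nat -> R) (A : R) (K : R -> R) (cK : R) (rho : R -> R).
Variables (Rf Rt : R -> R -> R) (C : R) (lam : R -> R) (psi : R -> R -> R).
Hypothesis HOm : ordered_intervals m a b.
Hypotheses (HKd : forall x, ex_derive K x) (HKc : forall x, continuous (Derive K) x).
Hypotheses (HKeven : forall x, K (- x) = K x) (HcK : forall x, cK <= K x) (HcK0 : 0 < cK).
Hypothesis CRf : cont_on2 (closedDom m a b A) Rf.
Hypothesis CRt : cont_on2 (closedDom m a b A) Rt.
Hypothesis HRt : forall x t, openDom m a b A (x, t) -> is_derive (fun s => Rf x s) t (Rt x t).
Hypothesis HRtC : forall x t, openDom m a b A (x, t) -> Rabs (Rt x t) <= C.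
Hypothesis Heig : forall t, - A < t < A ->
  principal_eigenpair m a b K Rf rho t (lam t) (psi t) /\ L2_normalized m a b (psi t).

(* With [s = C |h|], the gap estimate forces the overlap [c] of the two
   eigenfunctions to [1] at rate [h], which is what makes the error term
   [int Rt psi (phi - c psi)] small. *)
Lemma eigenvalue_quotient_error th h M eta beta : - A < th < A -> - A < th + h < A -> h <> 0 ->
  0 < beta -> (forall x, inOmegaBar m a b x -> 0 < psi th x) ->
  (forall x, inOmega m a b x -> psi th x <= M) ->
  (forall x, inOmega m a b x -> Rabs (Rf x (th + h) - Rf x th) <= C * Rabs h /\
                                Rabs ((Rf x (th + h) - Rf x th) / h - Rt x th) <= eta) ->
  2 * (C * Rabs h) <= cK / M ^ 2 * Rmin (3 / 4) (beta ^ 2) ->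
  Rabs ((lam (th + h) - lam th) / h - - IntOmega m a b (fun x => Rt x th * psi th x ^ 2))
  <= eta + 2 * C * beta.
Proof.
  intros Hth Hth' Hh Hbeta Hbar HM Hq Hsmall.
  destruct (Heig th Hth) as [Hpsi Npsi]. destruct (Heig (th + h) Hth') as [Hphi Nphi].
  pose proof (cont_Omega_slice m a b A Rf HOm CRf th Hth) as CR.
  pose proof (cont_Omega_slice m a b A Rf HOm CRf (th + h) Hth') as CR'.
  destruct (overlap_near_one m a b K Rf rho th (th + h) (lam th) (lam (th + h)) (psi th) (psi (th + h))
              HOm HKd HKc HKeven Hpsi Hphi CR CR' (fun x Hx => Rgt_not_eq _ _ (Hbar x Hx))
              cK M (C * Rabs h) HcK HcK0 HM (fun x Hx => proj1 (Hq x Hx)) Npsi Nphi _ (Rmin_l _ _) Hsmall)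
    as [Hc Hc2].
  apply (difference_quotient_error m a b K Rf rho th (th + h) (lam th) (lam (th + h)) (psi th) (psi (th + h))
           HOm HKd HKc HKeven Hpsi Hphi CR CR' Npsi Nphi h (fun x => Rt x th) C eta beta); auto.
  - apply Rle_trans with (1 := Hc2), Rmin_r.
  - intros x Hx. apply Hq, Hx.
  - intros x Hx. apply HRtC. split; assumption.
  - apply (cont_Omega_slice m a b A Rt HOm CRt th Hth).
Qed.

Lemma derivable_pt_lim_eigenvalue th M : - A < th < A ->
  (forall x, inOmegaBar m a b x -> 0 < psi th x) -> (forall x, inOmega m a b x -> psi th x <= M) ->
  derivable_pt_lim lam th (- IntOmega m a b (fun x => Rt x th * psi th x ^ 2)).
Proof.
  intros Hth Hbar HM eps Heps.
  pose proof (abs_bound_nonneg m a b HOm _ C (fun x Hx => HRtC x th (conj Hx Hth))) as HC0.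
  assert (HM0 : 0 < M).
  { pose proof (inOmega_midpoint m a b HOm) as Hx.
    pose proof (HM _ Hx). pose proof (Hbar _ (inOmega_closure _ _ _ _ Hx)). lra. }
  set (beta := eps / (3 * (C + 1))).
  assert (Hbeta : 0 < beta) by (apply Rdiv_lt_0_compat; lra).
  assert (Hbeta_eps : 2 * C * beta < 2 * eps / 3).
  { unfold beta. apply Rmult_lt_reg_r with (3 * (C + 1)); [lra |].
    replace (2 * C * (eps / (3 * (C + 1))) * (3 * (C + 1))) with (2 * C * eps) by (field; lra). nra. }
  set (r := cK * Rmin (3 / 4) (beta ^ 2) / (2 * (C + 1) * M ^ 2)).
  assert (Hr : 0 < r).
  { assert (0 < Rmin (3 / 4) (beta ^ 2)) by (apply Rmin_pos; [lra | apply pow_lt, Hbeta]).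
    pose proof (pow_lt M 2 HM0). unfold r. apply Rdiv_lt_0_compat; nra. }
  destruct (reaction_difference_quotient m a b A C Rf Rt HOm HRt CRt HRtC th (eps / 3) Hth ltac:(lra))
    as [d [Hd Hq]].
  assert (HA : 0 < A - Rabs th) by (pose proof (Rabs_def1 th A (proj2 Hth) (proj1 Hth)); lra).
  exists (mkposreal _ (Rmin_pos _ _ Hd (Rmin_pos _ _ HA Hr))). intros h Hh0 Hh. simpl in Hh.
  pose proof (Rmin_l d (Rmin (A - Rabs th) r)). pose proof (Rmin_r d (Rmin (A - Rabs th) r)).
  pose proof (Rmin_l (A - Rabs th) r). pose proof (Rmin_r (A - Rabs th) r).
  assert (Hth' : - A < th + h < A) by (assert (Rabs h < A - Rabs th) by lra; split_Rabs; split; lra).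
  eapply Rle_lt_trans; [apply (eigenvalue_quotient_error th h M (eps / 3) beta) | lra]; auto.
  - intros x Hx. apply Hq; auto. lra.
  - assert (E : cK / M ^ 2 * Rmin (3 / 4) (beta ^ 2) = 2 * (C + 1) * r)
      by (unfold r; field; split; apply Rgt_not_eq; lra).
    rewrite E. pose proof (Rabs_pos h). nra.
Qed.
End EigenvalueDerivative.

Theorem proposition1
  (A : R) (m : nat) (a b : nat -> R) (Rf : R -> R -> R) (CR : R)
  (K : R -> R) (cK CK : R) (rho : R -> R)
  (lam : R -> R) (psi : R -> R -> R)
  (HA : 0 < A)
  (HOm : ordered_intervals m a b)
  (HR : reaction_hyp m a b A Rf CR)
  (HK : kernel_hyp K cK CK)
  (Hrho : bounded_smooth_on_Omega m a b rho)
  (Heig : forall theta, - A < theta < A ->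
     principal_eigenpair m a b K Rf rho theta (lam theta) (psi theta) /\
     L2_normalized m a b (psi theta)) :
  forall theta, - A < theta < A ->
    is_derive lam theta
      (- IntOmega m a b
           (fun x => Derive (fun t => Rf x t) theta * (psi theta x) ^ 2)).
Proof.
  intros th Hth.
  destruct HR as [Rx [Rt [CRf [_ [CRt [HRd [C [_ HC]]]]]]]].
  destruct HK as [HcK0 [HKeven [HKd [HKc [HKb _]]]]].
  destruct Hrho as [[Mr HMr] _].
  assert (HcK : forall x, cK <= K x) by (intros x; destruct (HKb x); lra).
  assert (HCK : forall x, K x <= CK) by (intros x; destruct (HKb x); lra).
  assert (HRt : forall x t, openDom m a b A (x, t) -> is_derive (fun s => Rf x s) t (Rt x t))
    by (intros; apply HRd; assumption).
  destruct (Heig th Hth) as [Hpsi _].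
  assert (Hbar : forall x, inOmegaBar m a b x -> 0 < psi th x).
  { apply (eigen_pos_closure m a b K Rf rho th (lam th) (psi th) cK CK C Mr); auto.
    intros x Hx. apply HC. split; assumption. }
  destruct (cont_Omega_bounded m a b (psi th) HOm (eigen_cont_Omega m a b K Rf rho th _ _ HOm Hpsi))
    as [M HM].
  rewrite (IntOmega_ext m a b HOm _ (fun x => Rt x th * psi th x ^ 2)).
  - apply is_derive_Reals.
    apply (derivable_pt_lim_eigenvalue m a b A K cK rho Rf Rt C lam psi) with (M := M); auto.
    intros x t Hxt. apply HC, Hxt.
  - intros x Hx. f_equal. apply is_derive_unique, (HRt x th (conj Hx Hth)).
Qed.
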